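(* Let $1<p<\infty$, let $\alpha\in SOS(\mathbb{R}_+)$ with exponent function $\omega$ (i.e. $\alpha(t)=te^{\omega(t)}$), let $\xi\in\Delta$, and let \[ \mathfrak a(t,x):=e^{i\omega(t)(x+i/p)}\big(r_p(x)\big)^2,\qquad (t,x)\in(\mathbb{R}_+\times\mathbb{R})\cup(\Delta\times\mathbb{R}). \] Then there exists a function $\mathfrak b_\xi\in\mathcal E(\mathbb{R}_+,V(\mathbb{R}))$ such that \[ \mathfrak a(t,x)-\mathfrak a(\xi,x)=\big(\omega(t)-\omega(\xi)\big)r_p(x)\mathfrak b_\xi(t,x)\quad\text{for all }(t,x)\in\mathbb{R}_+\times\mathbb{R}. \]
   Context: $\mathbb{R}_+=(0,\infty)$. $SO(\mathbb{R}_+)$: bounded continuous complex $f$ on $\mathbb{R}_+$ with $\lim_{r\to s}\sup\{|f(t)-f(\tau)|:t,\tau\in[\lambda r,r]\}=0$ for $s\in\{0,\infty\}$ and each (equivalently some) $\lambda\in(0,1)$. $\Delta$ is the set of characters $\xi$ of the C*-algebra $SO(\mathbb{R}_+)$ whose restriction to $C([0,\infty])$ is evaluation at $0$ or at $\infty$; $\omega(\xi):=\xi(\omega)$. $SOS(\mathbb{R}_+)$: orientation-preserving diffeomorphisms $\alpha$ of $\mathbb{R}_+$ onto itself with no fixed points in $\mathbb{R}_+$ such that $\log\alpha'$ is bounded continuous and $\alpha'\in SO(\mathbb{R}_+)$; the exponent function $\omega(t)=\log[\alpha(t)/t]$ is real-valued and in $SO(\mathbb{R}_+)$. $r_p(x)=1/\sinh[\pi(x+i/p)]$.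 $V(\mathbb{R})$: absolutely continuous functions of finite total variation on $\mathbb{R}$, norm $\|a\|_V=\|a\|_{L^\infty}+\int_{\mathbb{R}}|a'|$. $C_b(\mathbb{R}_+,V(\mathbb{R}))$: bounded continuous maps $t\mapsto\mathfrak a(t,\cdot)\in V(\mathbb{R})$, norm $\sup_t\|\mathfrak a(t,\cdot)\|_V$. $SO(\mathbb{R}_+,V(\mathbb{R}))$: those $\mathfrak a$ with $\lim_{r\to0}\operatorname{cm}^C_r(\mathfrak a)=\lim_{r\to\infty}\operatorname{cm}^C_r(\mathfrak a)=0$, $\operatorname{cm}^C_r(\mathfrak a)=\max\{\|\mathfrak a(t,\cdot)-\mathfrak a(\tau,\cdot)\|_{L^\infty(\mathbb{R})}:t,\tau\in[r,2r]\}$. $\mathcal E(\mathbb{R}_+,V(\mathbb{R}))$: those $\mathfrak a\in SO(\mathbb{R}_+,V(\mathbb{R}))$ with $\lim_{|h|\to0}\sup_{t\in\mathbb{R}_+}\|\mathfrak a(t,\cdot)-\mathfrak a(t,\cdot+h)\|_V=0$. *)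

From Stdlib Require Import Reals List.
From Coquelicot Require Import Coquelicot.
Import ListNotations.
Open Scope R_scope.

Definition Cexp (z : C) : C :=
  (exp (Re z) * cos (Im z), exp (Re z) * sin (Im z)).
Definition Csinh (z : C) : C := ((Cexp z - Cexp (- z)) / RtoC 2)%C.

Definition r_p (p x : R) : C :=
  Cinv (Csinh (RtoC PI * (RtoC x + Ci * RtoC (/ p))))%C.

(** a(w, x) = e^{i w (x + i/p)} (r_p x)^2, for a (possibly complex) value w of
    the exponent; a(t,x) = a_fun p (omega t) x and a(xi,x) = a_fun p (xi omega) x. *)
Definition a_fun (p : R) (w : C) (x : R) : C :=
  (Cexp (Ci * w * (RtoC x + Ci * RtoC (/ p))) * (r_p p x * r_p p x))%C.

(** ---------- SO(R_+) : complex functions on R, only values on (0,oo) matter *)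
Definition cont_on_Rp (f : R -> C) : Prop :=
  forall t, 0 < t -> forall eps, 0 < eps -> exists delta, 0 < delta /\
    forall s, 0 < s -> Rabs (s - t) < delta -> Cmod (f s - f t)%C < eps.

Definition bounded_on_Rp (f : R -> C) : Prop :=
  exists M, forall t, 0 < t -> Cmod (f t) <= M.

Definition SO (f : R -> C) : Prop :=
  bounded_on_Rp f /\ cont_on_Rp f /\
  (forall lam, 0 < lam < 1 -> forall eps, 0 < eps ->
     exists delta, 0 < delta /\ forall r, 0 < r < delta ->
       forall t tau, lam * r <= t <= r -> lam * r <= tau <= r ->
         Cmod (f t - f tau)%C <= eps) /\
  (forall lam, 0 < lam < 1 -> forall eps, 0 < eps ->
     exists N, forall r, N < r ->
       forall t tau, lam * r <= t <= r -> lam * r <= tau <= r ->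
         Cmod (f t - f tau)%C <= eps).

Definition lim_at_0 (f : R -> C) (L : C) : Prop :=
  forall eps, 0 < eps -> exists delta, 0 < delta /\
    forall t, 0 < t < delta -> Cmod (f t - L)%C < eps.
Definition lim_at_oo (f : R -> C) (L : C) : Prop :=
  forall eps, 0 < eps -> exists N, forall t, N < t -> Cmod (f t - L)%C < eps.

(** C([0,oo]) viewed inside SO(R_+): continuous on (0,oo) with finite limits at 0 and oo. *)
Definition C0oo (f : R -> C) : Prop :=
  cont_on_Rp f /\ (exists L0, lim_at_0 f L0) /\ (exists L1, lim_at_oo f L1).

(** Xi is given on all functions R -> C, but is only
    constrained (and meaningful) on SO(R_+), as a function of the restriction to (0,oo). *)
Definition character (Xi : (R -> C) -> C) : Prop :=
  (forall f g, SO f -> SO g -> (forall t, 0 < t -> f t = g t) -> Xi f = Xi g) /\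
  (forall f g, SO f -> SO g -> Xi (fun t => f t + g t)%C = (Xi f + Xi g)%C) /\
  (forall (c : C) f, SO f -> Xi (fun t => c * f t)%C = (c * Xi f)%C) /\
  (forall f g, SO f -> SO g -> Xi (fun t => f t * g t)%C = (Xi f * Xi g)%C) /\
  (exists f, SO f /\ Xi f <> RtoC 0).

Definition in_Delta (Xi : (R -> C) -> C) : Prop :=
  character Xi /\
  ((forall f L, C0oo f -> lim_at_0 f L -> Xi f = L) \/
   (forall f L, C0oo f -> lim_at_oo f L -> Xi f = L)).

Definition SOS (alpha : R -> R) : Prop :=
  (forall t, 0 < t -> 0 < alpha t) /\
  (exists beta : R -> R,
     (forall s, 0 < s -> 0 < beta s /\ alpha (beta s) = s) /\
     (forall t, 0 < t -> beta (alpha t) = t) /\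
     (forall s, 0 < s -> exists l, derivable_pt_lim beta s l)) /\
  (forall t, 0 < t -> alpha t <> t) /\
  (exists alpha' : R -> R,
     (forall t, 0 < t -> derivable_pt_lim alpha t (alpha' t) /\ 0 < alpha' t) /\
     (exists M, forall t, 0 < t -> Rabs (ln (alpha' t)) <= M) /\
     (forall t, 0 < t -> continuity_pt (fun s => ln (alpha' s)) t) /\
     SO (fun t => RtoC (alpha' t))).

Definition exponent (alpha : R -> R) (t : R) : R := ln (alpha t / t).

Fixpoint var_list (f : R -> C) (l : list R) : R :=
  match l with
  | x :: ((y :: _) as l') => Cmod (f y - f x)%C + var_list f l'
  | _ => 0
  end.

Fixpoint incr_list (l : list R) : Prop :=
  match l with
  | x :: ((y :: _) as l') => x <= y /\ incr_list l'
  | _ => True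
  end.

Fixpoint nonoverlap (l : list (R * R)) : Prop :=
  match l with
  | [] => True
  | (a, b) :: l' => a <= b /\
      (match l' with [] => True | (a', _) :: _ => b <= a' end) /\ nonoverlap l'
  end.

Fixpoint len_sum (l : list (R * R)) : R :=
  match l with [] => 0 | (a, b) :: l' => (b - a) + len_sum l' end.
Fixpoint incr_sum (f : R -> C) (l : list (R * R)) : R :=
  match l with [] => 0 | (a, b) :: l' => Cmod (f b - f a)%C + incr_sum f l' end.

Definition abs_continuous (f : R -> C) : Prop :=
  forall eps, 0 < eps -> exists delta, 0 < delta /\
    forall l, nonoverlap l -> len_sum l < delta -> incr_sum f l < eps.

Definition bounded_variation (f : R -> C) : Prop :=
  exists M, forall l, incr_list l -> var_list f l <= M.

Definition in_V (f : R -> C) : Prop := abs_continuous f /\ bounded_variation f.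

(* ||f||_V = ||f||_oo + V(f) <= M  (for f in V(R), int |f'| = total variation V(f)) *)
Definition Vnorm_le (f : R -> C) (M : R) : Prop :=
  forall x l, incr_list l -> Cmod (f x) + var_list f l <= M.

Definition supnorm_le (f : R -> C) (M : R) : Prop :=
  forall x, Cmod (f x) <= M.

Definition Cb_V (b : R -> R -> C) : Prop :=
  (forall t, 0 < t -> in_V (b t)) /\
  (exists M, forall t, 0 < t -> Vnorm_le (b t) M) /\
  (forall t, 0 < t -> forall eps, 0 < eps -> exists delta, 0 < delta /\
     forall tau, 0 < tau -> Rabs (tau - t) < delta ->
       Vnorm_le (fun x => b tau x - b t x)%C eps).

Definition SO_V (b : R -> R -> C) : Prop :=
  Cb_V b /\
  (forall eps, 0 < eps -> exists delta, 0 < delta /\ forall r, 0 < r < delta ->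
     forall t tau, r <= t <= 2 * r -> r <= tau <= 2 * r ->
       supnorm_le (fun x => b t x - b tau x)%C eps) /\
  (forall eps, 0 < eps -> exists N, forall r, N < r ->
     forall t tau, r <= t <= 2 * r -> r <= tau <= 2 * r ->
       supnorm_le (fun x => b t x - b tau x)%C eps).

Definition E_V (b : R -> R -> C) : Prop :=
  SO_V b /\
  (forall eps, 0 < eps -> exists delta, 0 < delta /\ forall h, Rabs h < delta ->
     forall t, 0 < t -> Vnorm_le (fun x => Cminus (b t x) (b t (x + h))) eps).

(* Write a(s, x) = k(s, x) r_p(x) with k(s, x) = e^{i s (x + i/p)} r_p(x), and let
   w0 = xi(omega), which is real because a character of SO(R_+) is real on real
   functions.  Then b(t, x) is the divided difference (k(s, x) - k(w0, x)) / (s - w0)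
   at s = omega(t).  The derivatives of k of order at most two in s and x are
   polynomials in s, x and coth(pi (x + i/p)) times k, hence O(1/(1 + x^2))
   uniformly for bounded s by the exponential decay of r_p; by the mean value
   theorem the same bounds hold for the divided difference and its derivatives.
   A function whose x-derivative is O(1/(1 + x^2)) has variation controlled by
   that of atan, which bounds the V(R)-norms of b(t) - b(tau) by C |omega(t) -
   omega(tau)| and of b(t) - b(t)(. + h) by C |h|.  Finally omega is slowly
   oscillating because alpha' is and alpha(t)/t is a mean of alpha'. *)

From Stdlib Require Import Reals Lra Lia FunctionalExtensionality.
From Coquelicot Require Import Coquelicot.
Open Scope R_scope.

Lemma derive_ext (f g : R -> R) x l l' :
  derivable_pt_lim f x l -> (forall y, f y = g y) -> l = l' -> derivable_pt_lim g x l'.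
Proof. intros H Hfg <-. exact (derivable_pt_lim_ext f g x l Hfg H). Qed.

(* The Stdlib rules restated on explicit lambdas, which [apply] can unify with. *)
Lemma derive_mult (f g : R -> R) x df dg :
  derivable_pt_lim f x df -> derivable_pt_lim g x dg ->
  derivable_pt_lim (fun y => f y * g y) x (df * g x + f x * dg).
Proof. exact (derivable_pt_lim_mult f g x df dg). Qed.

Lemma derive_plus (f g : R -> R) x df dg :
  derivable_pt_lim f x df -> derivable_pt_lim g x dg ->
  derivable_pt_lim (fun y => f y + g y) x (df + dg).
Proof. exact (derivable_pt_lim_plus f g x df dg). Qed.

Lemma derive_minus (f g : R -> R) x df dg :
  derivable_pt_lim f x df -> derivable_pt_lim g x dg ->
  derivable_pt_lim (fun y => f y - g y) x (df - dg).
Proof. exact (derivable_pt_lim_minus f g x df dg). Qed.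

Lemma derive_comp (f g : R -> R) x df dg :
  derivable_pt_lim g x dg -> derivable_pt_lim f (g x) df ->
  derivable_pt_lim (fun y => f (g y)) x (df * dg).
Proof. exact (derivable_pt_lim_comp g f x dg df). Qed.

Lemma derive_const (a x : R) : derivable_pt_lim (fun _ => a) x 0.
Proof. exact (derivable_pt_lim_const a x). Qed.

Lemma derive_id x : derivable_pt_lim (fun y => y) x 1.
Proof. exact (derivable_pt_lim_id x). Qed.

Lemma derive_scal_atan B x : derivable_pt_lim (fun t => B * atan t) x (B * / (1 + x ^ 2)).
Proof.
  eapply derive_ext; [apply (derive_mult (fun _ => B) atan);
    [apply derive_const | apply derivable_pt_lim_atan] | reflexivity | ring].
Qed.

Lemma Cmod_le_abs_sum (z : C) : Cmod z <= Rabs (fst z) + Rabs (snd z).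
Proof.
  pose proof (Rabs_pos (fst z)); pose proof (Rabs_pos (snd z)).
  unfold Cmod. rewrite <- (sqrt_pow2 (Rabs (fst z) + Rabs (snd z))) by lra.
  apply sqrt_le_1_alt. rewrite <- (pow2_abs (fst z)), <- (pow2_abs (snd z)). nra.
Qed.

(* Both [B atan - u] and [B atan + u] are nondecreasing. *)
Lemma Rabs_diff_le_atan_of_deriv (u u' : R -> R) B :
  (forall x, derivable_pt_lim u x (u' x)) -> (forall x, Rabs (u' x) <= B / (1 + x ^ 2)) ->
  forall x y, x <= y -> Rabs (u y - u x) <= B * (atan y - atan x).
Proof.
  intros Hd Hb x y Hxy. destruct (Rle_lt_or_eq_dec _ _ Hxy) as [Hlt | <-].
  2:{ rewrite Rminus_eq_0, Rabs_R0. lra. }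
  destruct (MVT_cor2 (fun t => B * atan t - u t) (fun t => B * / (1 + t ^ 2) - u' t) x y Hlt)
    as [c1 [E1 _]].
  { intros c _. apply derive_minus; [apply derive_scal_atan | apply Hd]. }
  destruct (MVT_cor2 (fun t => B * atan t + u t) (fun t => B * / (1 + t ^ 2) + u' t) x y Hlt)
    as [c2 [E2 _]].
  { intros c _. apply derive_plus; [apply derive_scal_atan | apply Hd]. }
  pose proof (Hb c1) as H1; pose proof (Hb c2) as H2.
  apply Rabs_le_between in H1; apply Rabs_le_between in H2.
  apply Rabs_le. split; nra.
Qed.

Lemma inv_1_sq_pos x : 0 < / (1 + x ^ 2).
Proof. apply Rinv_0_lt_compat; nra. Qed.

Lemma inv_1_sq_le_1 x : / (1 + x ^ 2) <= 1.
Proof. rewrite <- Rinv_1. apply Rinv_le_contravar; nra. Qed.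

Lemma atan_diff_le x y : x <= y -> atan y - atan x <= y - x.
Proof.
  intros Hxy. destruct (Rle_lt_or_eq_dec _ _ Hxy) as [Hlt | <-]; [|lra].
  destruct (MVT_cor2 atan (fun t => / (1 + t ^ 2)) x y Hlt) as [c [-> _]].
  { intros; apply derivable_pt_lim_atan. }
  pose proof (inv_1_sq_le_1 c); pose proof (inv_1_sq_pos c). nra.
Qed.

Definition atan_controlled (f : R -> C) (A L : R) : Prop :=
  (forall x, Cmod (f x) <= A) /\
  (forall x y, x <= y -> Cmod (f y - f x)%C <= L * (atan y - atan x)).

Section AtanControlled.
Variables (f : R -> C) (A L : R).
Hypotheses (Hf : atan_controlled f A L) (HL : 0 <= L).

Lemma var_list_le_atan l x : incr_list (x :: l) -> var_list f (x :: l) <= L * (PI / 2 - atan x).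
Proof.
  destruct Hf as [_ Hinc]. revert x. induction l as [|y l IH]; intros x Hl.
  - pose proof (atan_bound x). simpl. nra.
  - destruct Hl as [Hxy Hl].
    change (var_list f (x :: y :: l)) with (Cmod (f y - f x)%C + var_list f (y :: l)).
    pose proof (IH y Hl). pose proof (Hinc x y Hxy). nra.
Qed.

Lemma var_list_le_atan_PI l : incr_list l -> var_list f l <= L * PI.
Proof.
  destruct l as [|y l]; intros Hl.
  - pose proof PI_RGT_0. simpl. nra.
  - pose proof (var_list_le_atan l y Hl). pose proof (atan_bound y). nra.
Qed.

Lemma atan_controlled_Vnorm_le : Vnorm_le f (A + L * PI).
Proof.
  intros x l Hl. pose proof (var_list_le_atan_PI l Hl). destruct Hf as [Hb _].
  pose proof (Hb x). lra.
Qed.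

Lemma incr_sum_le_len_sum l : nonoverlap l -> incr_sum f l <= L * len_sum l.
Proof.
  destruct Hf as [_ Hinc]. induction l as [|[a b] l IH]; intros Hl; simpl; [lra|].
  destruct Hl as [Hab [_ Hl]].
  pose proof (IH Hl). pose proof (Hinc a b Hab). pose proof (atan_diff_le a b Hab). nra.
Qed.

Lemma atan_controlled_in_V : in_V f.
Proof.
  split.
  - intros eps Heps. exists (eps / (L + 1)). split; [apply Rdiv_lt_0_compat; lra|].
    intros l Hn Hl. pose proof (incr_sum_le_len_sum l Hn).
    assert (L * len_sum l <= L * (eps / (L + 1))) by (apply Rmult_le_compat_l; lra).
    assert (L * (eps / (L + 1)) < eps).
    { apply (Rmult_lt_reg_r (L + 1)); [lra|].
      replace (L * (eps / (L + 1)) * (L + 1)) with (L * eps) by (field; lra). nra. }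
    lra.
  - exists (L * PI). exact var_list_le_atan_PI.
Qed.
End AtanControlled.

Lemma atan_controlled_of_deriv (f : R -> C) (u' v' : R -> R) A B :
  (forall x, derivable_pt_lim (fun y => fst (f y)) x (u' x)) ->
  (forall x, derivable_pt_lim (fun y => snd (f y)) x (v' x)) ->
  (forall x, Rabs (u' x) <= B / (1 + x ^ 2)) -> (forall x, Rabs (v' x) <= B / (1 + x ^ 2)) ->
  (forall x, Rabs (fst (f x)) <= A) -> (forall x, Rabs (snd (f x)) <= A) ->
  atan_controlled f (2 * A) (2 * B).
Proof.
  intros Hu Hv Bu Bv Au Av. split.
  - intros x. pose proof (Cmod_le_abs_sum (f x)). pose proof (Au x); pose proof (Av x). lra.
  - intros x y Hxy. eapply Rle_trans; [apply Cmod_le_abs_sum|].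
    pose proof (Rabs_diff_le_atan_of_deriv _ _ B Hu Bu x y Hxy).
    pose proof (Rabs_diff_le_atan_of_deriv _ _ B Hv Bv x y Hxy).
    simpl. unfold Rminus in *. lra.
Qed.

Lemma Vnorm_le_weaken f A A' : Vnorm_le f A -> A <= A' -> Vnorm_le f A'.
Proof. intros H HA x l Hl. specialize (H x l Hl). lra. Qed.

Lemma inv_1_sq_shift x c : Rabs (c - x) <= 1 -> / (1 + c ^ 2) <= 3 / (1 + x ^ 2).
Proof.
  intros H. apply Rabs_le_between in H. unfold Rdiv.
  apply (Rmult_le_reg_r ((1 + c ^ 2) * (1 + x ^ 2))); [nra|].
  replace (/ (1 + c ^ 2) * ((1 + c ^ 2) * (1 + x ^ 2))) with (1 + x ^ 2) by (field; nra).
  replace (3 * / (1 + x ^ 2) * ((1 + c ^ 2) * (1 + x ^ 2))) with (3 * (1 + c ^ 2))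
    by (field; nra).
  assert (0 <= (c - (x - c)) ^ 2) by apply pow2_ge_0. nra.
Qed.

Record decaying_family (U V W : R -> R -> R) (K B : R) : Prop := {
  df_deriv : forall s x, Rabs s <= K -> derivable_pt_lim (U s) x (V s x);
  df_deriv2 : forall s x, Rabs s <= K -> derivable_pt_lim (V s) x (W s x);
  df_bound : forall s x, Rabs s <= K -> Rabs (U s x) <= B;
  df_deriv_bound : forall s x, Rabs s <= K -> Rabs (V s x) <= B / (1 + x ^ 2);
  df_deriv2_bound : forall s x, Rabs s <= K -> Rabs (W s x) <= B / (1 + x ^ 2);
  df_lip : forall s s' x, Rabs s <= K -> Rabs s' <= K ->
    Rabs (U s x - U s' x) <= B * Rabs (s - s');
  df_deriv_lip : forall s s' x, Rabs s <= K -> Rabs s' <= K ->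
    Rabs (V s x - V s' x) <= B * Rabs (s - s') / (1 + x ^ 2) }.

Lemma decaying_family_weaken U V W K B B' :
  decaying_family U V W K B -> B <= B' -> decaying_family U V W K B'.
Proof.
  intros [h1 h2 h3 h4 h5 h6 h7] HB.
  assert (Hw : forall x, B / (1 + x ^ 2) <= B' / (1 + x ^ 2)).
  { intros. unfold Rdiv. apply Rmult_le_compat_r; auto. left; apply inv_1_sq_pos. }
  split; auto; intros.
  - eapply Rle_trans; [apply h3; auto | lra].
  - eapply Rle_trans; [apply h4; auto | auto].
  - eapply Rle_trans; [apply h5; auto | auto].
  - eapply Rle_trans; [apply h6; auto|]. apply Rmult_le_compat_r; auto. apply Rabs_pos.
  - eapply Rle_trans; [apply h7; auto|]. unfold Rdiv. apply Rmult_le_compat_r.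
    + left; apply inv_1_sq_pos.
    + apply Rmult_le_compat_r; auto. apply Rabs_pos.
Qed.

Section DecayingFamily.
Variables (U V W : R -> R -> R) (K B : R).
Hypothesis H : decaying_family U V W K B.

Lemma decaying_family_B_nonneg : 0 <= K -> 0 <= B.
Proof.
  intros HK. pose proof (df_bound _ _ _ _ _ H 0 0 ltac:(rewrite Rabs_R0; lra)).
  pose proof (Rabs_pos (U 0 0)). lra.
Qed.

Lemma decaying_family_shift s x h : Rabs s <= K -> Rabs (U s x - U s (x + h)) <= B * Rabs h.
Proof.
  intros Hs. destruct (MVT_abs (U s) (V s) x (x + h)) as [c [E _]].
  { intros; apply (df_deriv _ _ _ _ _ H); auto. }
  rewrite <- Rabs_Ropp. replace (- (U s x - U s (x + h))) with (U s (x + h) - U s x) by ring.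
  rewrite E. replace (x + h - x) with h by ring. apply Rmult_le_compat_r; [apply Rabs_pos|].
  pose proof (df_deriv_bound _ _ _ _ _ H s c Hs). pose proof (Rabs_pos (V s c)).
  pose proof (inv_1_sq_le_1 c). pose proof (inv_1_sq_pos c). unfold Rdiv in *. nra.
Qed.

Lemma decaying_family_deriv_shift s x h : Rabs s <= K -> Rabs h <= 1 ->
  Rabs (V s x - V s (x + h)) <= 3 * B * Rabs h / (1 + x ^ 2).
Proof.
  intros Hs Hh. destruct (MVT_abs (V s) (W s) x (x + h)) as [c [E Hc]].
  { intros; apply (df_deriv2 _ _ _ _ _ H); auto. }
  rewrite <- Rabs_Ropp. replace (- (V s x - V s (x + h))) with (V s (x + h) - V s x) by ring.
  rewrite E. replace (x + h - x) with h by ring.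
  assert (Hcx : Rabs (c - x) <= 1).
  { apply Rabs_le_between in Hh. destruct Hc as [Hc1 Hc2].
    unfold Rmin, Rmax in *. apply Rabs_le.
    destruct (Rle_dec x (x + h)); lra. }
  pose proof (inv_1_sq_shift x c Hcx). pose proof (df_deriv2_bound _ _ _ _ _ H s c Hs).
  pose proof (Rabs_pos (W s c)). pose proof (inv_1_sq_pos c). pose proof (Rabs_pos h).
  unfold Rdiv in *.
  assert (Rabs (W s c) <= B * (3 * / (1 + x ^ 2))) by nra.
  nra.
Qed.
End DecayingFamily.

Definition cpair (U1 U2 : R -> R -> R) (s x : R) : C := (U1 s x, U2 s x).

Lemma derive_shift (u u' : R -> R) h x :
  derivable_pt_lim u (x + h) (u' (x + h)) -> derivable_pt_lim (fun y => u (y + h)) x (u' (x + h)).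
Proof.
  intros Hu. eapply derive_ext; [apply (derive_comp u (fun y => y + h)); [|exact Hu]| |].
  - apply derive_plus; [apply derive_id | apply derive_const].
  - reflexivity.
  - ring.
Qed.

Section Cpair.
Variables (U1 V1 W1 U2 V2 W2 : R -> R -> R) (K B : R).
Hypotheses (H1 : decaying_family U1 V1 W1 K B) (H2 : decaying_family U2 V2 W2 K B).

Lemma cpair_atan_controlled s : Rabs s <= K -> atan_controlled (cpair U1 U2 s) (2 * B) (2 * B).
Proof.
  intros Hs. apply (atan_controlled_of_deriv _ (V1 s) (V2 s)); simpl; intros x;
    [apply H1 | apply H2 | apply H1 | apply H2 | apply H1 | apply H2]; auto.
Qed.

Lemma cpair_diff_atan_controlled s s' : Rabs s <= K -> Rabs s' <= K ->
  atan_controlled (fun x => cpair U1 U2 s x - cpair U1 U2 s' x)%C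
    (2 * (B * Rabs (s - s'))) (2 * (B * Rabs (s - s'))).
Proof.
  intros Hs Hs'.
  apply (atan_controlled_of_deriv _ (fun x => V1 s x - V1 s' x) (fun x => V2 s x - V2 s' x));
    simpl; intros x.
  - apply derive_minus; apply H1; auto.
  - apply derive_minus; apply H2; auto.
  - apply H1; auto.
  - apply H2; auto.
  - apply H1; auto.
  - apply H2; auto.
Qed.

Lemma cpair_shift_atan_controlled s h : Rabs s <= K -> Rabs h <= 1 ->
  atan_controlled (fun x => cpair U1 U2 s x - cpair U1 U2 s (x + h))%C
    (2 * (B * Rabs h)) (2 * (3 * B * Rabs h)).
Proof.
  intros Hs Hh.
  apply (atan_controlled_of_deriv _ (fun x => V1 s x - V1 s (x + h))
    (fun x => V2 s x - V2 s (x + h))); simpl; intros x.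
  - apply derive_minus; [|apply derive_shift]; apply H1; auto.
  - apply derive_minus; [|apply derive_shift]; apply H2; auto.
  - apply (decaying_family_deriv_shift _ _ _ _ _ H1); auto.
  - apply (decaying_family_deriv_shift _ _ _ _ _ H2); auto.
  - apply (decaying_family_shift _ _ _ _ _ H1); auto.
  - apply (decaying_family_shift _ _ _ _ _ H2); auto.
Qed.

Lemma cpair_sup_diff s s' x : Rabs s <= K -> Rabs s' <= K ->
  Cmod (cpair U1 U2 s x - cpair U1 U2 s' x)%C <= 2 * B * Rabs (s - s').
Proof.
  intros Hs Hs'. eapply Rle_trans; [apply Cmod_le_abs_sum|]. simpl.
  pose proof (df_lip _ _ _ _ _ H1 s s' x Hs Hs').
  pose proof (df_lip _ _ _ _ _ H2 s s' x Hs Hs'). unfold Rminus in *. lra.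
Qed.
End Cpair.

(* At the center [w0] we use the derivative [phi' w0]: this is the value the
   quotient tends to, so [divdiff] is continuous. *)
Definition divdiff (w0 : R) (phi phi' : R -> R) (s : R) : R :=
  if Req_EM_T s w0 then phi' w0 else (phi s - phi w0) / (s - w0).

Definition between a b c := Rmin a b <= c <= Rmax a b.

Lemma between_sym a b c : between a b c -> between b a c.
Proof. unfold between; rewrite Rmin_comm, Rmax_comm; auto. Qed.

Lemma between_abs_le a b c K : Rabs a <= K -> Rabs b <= K -> between a b c -> Rabs c <= K.
Proof.
  unfold between, Rmin, Rmax; intros Ha Hb [H1 H2].
  apply Rabs_le_between in Ha; apply Rabs_le_between in Hb.
  apply Rabs_le. destruct (Rle_dec a b); lra.
Qed.

Lemma between_dist a b c : between a b c -> Rabs (c - a) <= Rabs (b - a).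
Proof.
  unfold between, Rmin, Rmax, Rabs; intros [H1 H2].
  destruct (Rle_dec a b); destruct (Rcase_abs (c - a)); destruct (Rcase_abs (b - a)); lra.
Qed.

Lemma MVT_between (f f' : R -> R) a b :
  (forall c, between a b c -> derivable_pt_lim f c (f' c)) ->
  exists c, between a b c /\ f b - f a = f' c * (b - a).
Proof.
  unfold between, Rmin, Rmax; intros Hd.
  destruct (Rtotal_order a b) as [Hlt | [<- | Hgt]].
  - destruct (MVT_cor2 f f' a b Hlt) as [c [E Hc]].
    { intros c Hc; apply Hd. destruct (Rle_dec a b); lra. }
    exists c; split; auto. destruct (Rle_dec a b); lra.
  - exists a. split; [destruct (Rle_dec a a); lra | ring].
  - destruct (MVT_cor2 f f' b a Hgt) as [c [E Hc]].
    { intros c Hc; apply Hd. destruct (Rle_dec a b); lra. }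
    exists c; split; [destruct (Rle_dec a b); lra | nra].
Qed.

Lemma Rabs_diff_le_of_deriv (f f' : R -> R) a b M :
  (forall c, between a b c -> derivable_pt_lim f c (f' c)) ->
  (forall c, between a b c -> Rabs (f' c) <= M) ->
  Rabs (f b - f a) <= M * Rabs (b - a).
Proof.
  intros Hd Hb. destruct (MVT_between f f' a b Hd) as [c [Hc ->]]. rewrite Rabs_mult.
  apply Rmult_le_compat_r; [apply Rabs_pos | auto].
Qed.

Section DividedDifference.
Variables (w0 K : R) (phi phi' phi'' : R -> R) (M : R).
Hypotheses (Hw0 : Rabs w0 <= K)
  (Hd1 : forall c, Rabs c <= K -> derivable_pt_lim phi c (phi' c)).

Lemma divdiff_bound : (forall c, Rabs c <= K -> Rabs (phi' c) <= M) ->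
  forall s, Rabs s <= K -> Rabs (divdiff w0 phi phi' s) <= M.
Proof.
  intros Hb s Hs. unfold divdiff. destruct (Req_EM_T s w0); auto.
  assert (Hsw : 0 < Rabs (s - w0)) by (apply Rabs_pos_lt; lra).
  unfold Rdiv. rewrite Rabs_mult, Rabs_inv.
  apply (Rmult_le_reg_r (Rabs (s - w0))); auto.
  rewrite Rmult_assoc, Rinv_l, Rmult_1_r by lra.
  apply (Rabs_diff_le_of_deriv phi phi'); intros c Hc; [apply Hd1 | apply Hb];
    apply (between_abs_le w0 s); auto.
Qed.

Hypotheses (Hd2 : forall c, Rabs c <= K -> derivable_pt_lim phi' c (phi'' c))
  (Hb2 : forall c, Rabs c <= K -> Rabs (phi'' c) <= M).

Lemma divdiff_near_center s : Rabs s <= K ->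
  Rabs (divdiff w0 phi phi' s - phi' w0) <= M * Rabs (s - w0).
Proof.
  intros Hs. assert (HM : 0 <= M) by (pose proof (Hb2 w0 Hw0); pose proof (Rabs_pos (phi'' w0)); lra).
  unfold divdiff. destruct (Req_EM_T s w0).
  { rewrite Rminus_eq_0, Rabs_R0. pose proof (Rabs_pos (s - w0)). nra. }
  destruct (MVT_between phi phi' w0 s) as [c [Hc ->]].
  { intros c Hc; apply Hd1; apply (between_abs_le w0 s); auto. }
  replace (phi' c * (s - w0) / (s - w0)) with (phi' c) by (field; lra).
  assert (Hcd : forall d, between w0 c d -> Rabs d <= K).
  { intros d Hd. apply (between_abs_le w0 c); auto. apply (between_abs_le w0 s); auto. }
  eapply Rle_trans; [apply (Rabs_diff_le_of_deriv phi' phi'' w0 c M); auto|].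
  apply Rmult_le_compat_l; auto. apply between_dist; auto.
Qed.

(* On one side of [w0] the quotient is differentiable, with derivative
   [(phi' y - phi' d) / (y - w0)] for a mean value point [d] between [w0] and [y]. *)
Lemma divdiff_lipschitz_same_side s s' : Rabs s <= K -> Rabs s' <= K ->
  0 < (s - w0) * (s' - w0) ->
  Rabs (divdiff w0 phi phi' s - divdiff w0 phi phi' s') <= M * Rabs (s - s').
Proof.
  intros Hs Hs' Hsame.
  set (q := fun y => (phi y - phi w0) / (y - w0)).
  assert (Hq : forall y, y <> w0 -> divdiff w0 phi phi' y = q y).
  { intros y Hy. unfold divdiff. destruct (Req_EM_T y w0); [contradiction | reflexivity]. }
  rewrite (Hq s), (Hq s') by (intros ->; lra).
  assert (Hin : forall c, between s' s c -> c <> w0 /\ Rabs c <= K).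
  { intros c Hc. split; [|apply (between_abs_le s' s); auto].
    unfold between, Rmin, Rmax in Hc. destruct (Rle_dec s' s); intros ->; nra. }
  apply (Rabs_diff_le_of_deriv q (fun y => (phi' y * (y - w0) - (phi y - phi w0)) / (y - w0) ^ 2)).
  - intros c Hc. destruct (Hin c Hc) as [Hc1 Hc2].
    eapply derive_ext.
    + apply (derivable_pt_lim_div (fun y => phi y - phi w0) (fun y => y - w0) c (phi' c - 0) (1 - 0));
        [apply derive_minus; [apply Hd1; auto | apply derive_const]
        |apply derive_minus; [apply derive_id | apply derive_const] | lra].
    + reflexivity.
    + unfold Rsqr. field. lra.
  - intros c Hc. destruct (Hin c Hc) as [Hc1 Hc2].
    destruct (MVT_between phi phi' w0 c) as [d [Hdd ->]].
    { intros d Hd; apply Hd1; apply (between_abs_le w0 c); auto. }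
    replace ((phi' c * (c - w0) - phi' d * (c - w0)) / (c - w0) ^ 2)
      with ((phi' c - phi' d) / (c - w0)) by (field; lra).
    assert (Hcw : 0 < Rabs (c - w0)) by (apply Rabs_pos_lt; lra).
    unfold Rdiv. rewrite Rabs_mult, Rabs_inv.
    apply (Rmult_le_reg_r (Rabs (c - w0))); auto.
    rewrite Rmult_assoc, Rinv_l, Rmult_1_r by lra.
    assert (Hde : forall e, between d c e -> Rabs e <= K).
    { intros e He. apply (between_abs_le d c); auto. apply (between_abs_le w0 c); auto. }
    eapply Rle_trans; [apply (Rabs_diff_le_of_deriv phi' phi'' d c M); auto|].
    assert (HM : 0 <= M) by (pose proof (Hb2 w0 Hw0); pose proof (Rabs_pos (phi'' w0)); lra).
    apply Rmult_le_compat_l; auto.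
    rewrite <- Rabs_Ropp, <- (Rabs_Ropp (c - w0)).
    replace (- (c - d)) with (d - c) by ring. replace (- (c - w0)) with (w0 - c) by ring.
    apply between_dist, between_sym; auto.
Qed.

Lemma divdiff_lipschitz s s' : Rabs s <= K -> Rabs s' <= K ->
  Rabs (divdiff w0 phi phi' s - divdiff w0 phi phi' s') <= M * Rabs (s - s').
Proof.
  intros Hs Hs'. destruct (Rle_dec ((s - w0) * (s' - w0)) 0) as [Hopp | Hsame].
  - assert (HM : 0 <= M) by (pose proof (Hb2 w0 Hw0); pose proof (Rabs_pos (phi'' w0)); lra).
    replace (divdiff w0 phi phi' s - divdiff w0 phi phi' s') with
      ((divdiff w0 phi phi' s - phi' w0) - (divdiff w0 phi phi' s' - phi' w0)) by ring.
    eapply Rle_trans; [apply Rabs_triang|]. rewrite Rabs_Ropp.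
    eapply Rle_trans; [apply Rplus_le_compat; apply divdiff_near_center; eauto|].
    rewrite <- Rmult_plus_distr_l. apply Rmult_le_compat_l; auto.
    unfold Rabs; destruct (Rcase_abs (s - w0)); destruct (Rcase_abs (s' - w0));
      destruct (Rcase_abs (s - s')); nra.
  - apply divdiff_lipschitz_same_side; auto. lra.
Qed.
End DividedDifference.

Lemma divdiff_derive_param w0 (F Fs Fx Fsx : R -> R -> R) s x :
  (forall sg, derivable_pt_lim (F sg) x (Fx sg x)) ->
  derivable_pt_lim (Fs w0) x (Fsx w0 x) ->
  derivable_pt_lim (fun y => divdiff w0 (fun sg => F sg y) (fun sg => Fs sg y) s) x
                   (divdiff w0 (fun sg => Fx sg x) (fun sg => Fsx sg x) s).
Proof.
  intros H1 H2. unfold divdiff. destruct (Req_EM_T s w0); auto.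
  eapply derive_ext; [apply (derive_mult (fun y => F s y - F w0 y) (fun _ => / (s - w0)));
    [apply derive_minus; auto | apply derive_const] | |].
  - intros; unfold Rdiv; ring.
  - unfold Rdiv; ring.
Qed.

(* [F sg x] with derivatives in [sg] (subscript [s]) and in [x] (subscript [x]). *)
Record smooth_family (F Fs Fx Fsx Fxx Fsxx Fss Fssx : R -> R -> R) (K B : R) : Prop := {
  sf_ds : forall sg x, Rabs sg <= K -> derivable_pt_lim (fun t => F t x) sg (Fs sg x);
  sf_dxs : forall sg x, Rabs sg <= K -> derivable_pt_lim (fun t => Fx t x) sg (Fsx sg x);
  sf_dxxs : forall sg x, Rabs sg <= K -> derivable_pt_lim (fun t => Fxx t x) sg (Fsxx sg x);
  sf_dss : forall sg x, Rabs sg <= K -> derivable_pt_lim (fun t => Fs t x) sg (Fss sg x);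
  sf_dsxs : forall sg x, Rabs sg <= K -> derivable_pt_lim (fun t => Fsx t x) sg (Fssx sg x);
  sf_dx : forall sg x, derivable_pt_lim (F sg) x (Fx sg x);
  sf_dxx : forall sg x, derivable_pt_lim (Fx sg) x (Fxx sg x);
  sf_dsx : forall sg x, derivable_pt_lim (Fs sg) x (Fsx sg x);
  sf_dsxx : forall sg x, derivable_pt_lim (Fsx sg) x (Fsxx sg x);
  sf_s_bound : forall sg x, Rabs sg <= K -> Rabs (Fs sg x) <= B;
  sf_ss_bound : forall sg x, Rabs sg <= K -> Rabs (Fss sg x) <= B;
  sf_sx_bound : forall sg x, Rabs sg <= K -> Rabs (Fsx sg x) <= B / (1 + x ^ 2);
  sf_sxx_bound : forall sg x, Rabs sg <= K -> Rabs (Fsxx sg x) <= B / (1 + x ^ 2);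
  sf_ssx_bound : forall sg x, Rabs sg <= K -> Rabs (Fssx sg x) <= B / (1 + x ^ 2) }.

Lemma divdiff_decaying_family F Fs Fx Fsx Fxx Fsxx Fss Fssx K B w0 :
  Rabs w0 <= K -> smooth_family F Fs Fx Fsx Fxx Fsxx Fss Fssx K B ->
  decaying_family (fun s x => divdiff w0 (fun t => F t x) (fun t => Fs t x) s)
                  (fun s x => divdiff w0 (fun t => Fx t x) (fun t => Fsx t x) s)
                  (fun s x => divdiff w0 (fun t => Fxx t x) (fun t => Fsxx t x) s) K B.
Proof.
  intros Hw [s1 s2 s3 s4 s5 x1 x2 x3 x4 b1 b2 b3 b4 b5]. split.
  - intros s x _. apply divdiff_derive_param; auto.
  - intros s x _. apply divdiff_derive_param; auto.
  - intros s x Hs. apply (divdiff_bound w0 K); auto.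
  - intros s x Hs. apply (divdiff_bound w0 K); auto.
  - intros s x Hs. apply (divdiff_bound w0 K); auto.
  - intros s s' x Hs Hs'. apply (divdiff_lipschitz w0 K _ _ (fun t => Fss t x)); auto.
  - intros s s' x Hs Hs'. unfold Rdiv. rewrite Rmult_assoc, (Rmult_comm (Rabs _)), <- Rmult_assoc.
    apply (divdiff_lipschitz w0 K _ _ (fun t => Fssx t x)); auto.
Qed.

Definition Cderiv (f f' : R -> C) : Prop :=
  forall y, derivable_pt_lim (fun t => fst (f t)) y (fst (f' y)) /\
            derivable_pt_lim (fun t => snd (f t)) y (snd (f' y)).

Lemma Cderiv_ext f g f' g' :
  (forall t, f t = g t) -> (forall t, f' t = g' t) -> Cderiv f f' -> Cderiv g g'.
Proof.
  intros Hf Hf' H y. destruct (H y) as [A B].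
  split; [eapply derive_ext; [exact A | | ] | eapply derive_ext; [exact B | | ]];
    intros; cbv beta; now rewrite ?Hf, ?Hf'.
Qed.

Lemma Cderiv_const (c : C) : Cderiv (fun _ => c) (fun _ => 0%C).
Proof. intros y; split; simpl; apply derive_const. Qed.

Lemma Cderiv_id : Cderiv (fun t => RtoC t) (fun _ => 1%C).
Proof. intros y; split; simpl; [apply derive_id | apply derive_const]. Qed.

Lemma Cderiv_plus f g f' g' :
  Cderiv f f' -> Cderiv g g' -> Cderiv (fun t => f t + g t)%C (fun t => f' t + g' t)%C.
Proof.
  intros H1 H2 y. destruct (H1 y) as [A1 B1]; destruct (H2 y) as [A2 B2].
  split; apply derive_plus; auto.
Qed.

Lemma Cderiv_opp f f' : Cderiv f f' -> Cderiv (fun t => - f t)%C (fun t => - f' t)%C.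
Proof.
  intros H y. destruct (H y) as [A B]. split.
  - eapply derive_ext; [apply (derive_minus (fun _ => 0) (fun t => fst (f t)));
      [apply derive_const | exact A] | intros; simpl; ring | simpl; ring].
  - eapply derive_ext; [apply (derive_minus (fun _ => 0) (fun t => snd (f t)));
      [apply derive_const | exact B] | intros; simpl; ring | simpl; ring].
Qed.

Lemma Cderiv_minus f g f' g' :
  Cderiv f f' -> Cderiv g g' -> Cderiv (fun t => f t - g t)%C (fun t => f' t - g' t)%C.
Proof. intros H1 H2. apply Cderiv_plus; auto. apply Cderiv_opp; auto. Qed.

Lemma Cderiv_mult f g f' g' : Cderiv f f' -> Cderiv g g' ->
  Cderiv (fun t => f t * g t)%C (fun t => f' t * g t + f t * g' t)%C.
Proof.
  intros H1 H2 y. destruct (H1 y) as [A1 B1]; destruct (H2 y) as [A2 B2]. split.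
  - eapply derive_ext; [apply (derive_minus (fun t => fst (f t) * fst (g t))
      (fun t => snd (f t) * snd (g t))); apply derive_mult; [exact A1 | exact A2 | exact B1 | exact B2]
      | reflexivity | simpl; ring].
  - eapply derive_ext; [apply (derive_plus (fun t => fst (f t) * snd (g t))
      (fun t => snd (f t) * fst (g t))); apply derive_mult; [exact A1 | exact B2 | exact B1 | exact A2]
      | reflexivity | simpl; ring].
Qed.

Lemma Cderiv_exp g g' : Cderiv g g' -> Cderiv (fun t => Cexp (g t)) (fun t => Cexp (g t) * g' t)%C.
Proof.
  intros H y. destruct (H y) as [A B]. unfold Cexp, Re, Im. split.
  - eapply derive_ext; [apply (derive_mult (fun t => exp (fst (g t))) (fun t => cos (snd (g t))));
      apply derive_comp; [exact A | apply derivable_pt_lim_exp | exact B | apply derivable_pt_lim_cos]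
      | reflexivity | simpl; ring].
  - eapply derive_ext; [apply (derive_mult (fun t => exp (fst (g t))) (fun t => sin (snd (g t))));
      apply derive_comp; [exact A | apply derivable_pt_lim_exp | exact B | apply derivable_pt_lim_sin]
      | reflexivity | simpl; ring].
Qed.

Lemma Cnorm2_neq_0 (z : C) : z <> 0%C -> fst z ^ 2 + snd z ^ 2 <> 0.
Proof.
  intros Hz H. apply Hz. destruct z as [a b]; simpl in *.
  assert (a = 0) by nra. assert (b = 0) by nra. subst. reflexivity.
Qed.

Lemma Cderiv_inv g g' : Cderiv g g' -> (forall t, g t <> 0%C) ->
  Cderiv (fun t => / g t)%C (fun t => - g' t * / g t * / g t)%C.
Proof.
  intros H Hnz y. destruct (H y) as [A B]. pose proof (Cnorm2_neq_0 _ (Hnz y)) as N.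
  assert (DN : derivable_pt_lim (fun t => fst (g t) ^ 2 + snd (g t) ^ 2) y
      (2 * fst (g y) * fst (g' y) + 2 * snd (g y) * snd (g' y))).
  { eapply derive_ext; [apply (derive_plus (fun t => fst (g t) * fst (g t))
      (fun t => snd (g t) * snd (g t))); apply derive_mult; [exact A | exact A | exact B | exact B]
      | intros; cbv beta; ring | cbv beta; ring]. }
  assert (DB : derivable_pt_lim (fun t => - snd (g t)) y (- snd (g' y))).
  { eapply derive_ext; [apply (derive_minus (fun _ => 0)); [apply derive_const | exact B]
      | intros; cbv beta; ring | cbv beta; ring]. }
  split; simpl.
  - eapply derive_ext; [apply (derivable_pt_lim_div (fun t => fst (g t))
      (fun t => fst (g t) ^ 2 + snd (g t) ^ 2)); [exact A | exact DN | exact N] | reflexivity |].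
    unfold Rsqr. field. intros Hc; apply N; nra.
  - eapply derive_ext; [apply (derivable_pt_lim_div (fun t => - snd (g t))
      (fun t => fst (g t) ^ 2 + snd (g t) ^ 2)); [exact DB | exact DN | exact N] | reflexivity |].
    unfold Rsqr. field. intros Hc; apply N; nra.
Qed.

Lemma exp_le_exp a b : a <= b -> exp a <= exp b.
Proof. intros [H | ->]; [left; apply exp_increasing; auto | lra]. Qed.

Lemma cosh_pos x : 0 < cosh x.
Proof. unfold cosh. pose proof (exp_pos x); pose proof (exp_pos (- x)). lra. Qed.

Lemma sqr_sinh_le_sqr_cosh x : sinh x ^ 2 <= cosh x ^ 2.
Proof. unfold sinh, cosh. pose proof (exp_pos x); pose proof (exp_pos (- x)). nra. Qed.

Lemma exp_abs_le_2_cosh_PI x : exp (Rabs x) <= 2 * cosh (PI * x).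
Proof.
  unfold cosh. pose proof PI2_1. pose proof (exp_pos (PI * x)); pose proof (exp_pos (- (PI * x))).
  assert (exp (Rabs x) <= exp (PI * Rabs x)).
  { apply exp_le_exp. pose proof (Rabs_pos x). nra. }
  unfold Rabs in *. destruct (Rcase_abs x); [|lra].
  replace (PI * - x) with (- (PI * x)) in * by ring. lra.
Qed.

Lemma Cmod_Cexp (u : C) : Cmod (Cexp u) = exp (fst u).
Proof.
  unfold Cexp, Cmod, Re, Im; cbn [fst snd].
  replace ((exp (fst u) * cos (snd u)) ^ 2 + (exp (fst u) * sin (snd u)) ^ 2)
    with (exp (fst u) ^ 2) by (pose proof (sin2_cos2 (snd u)); unfold Rsqr in *; nra).
  apply sqrt_pow2. apply Rlt_le, exp_pos.
Qed.

Section Kernel.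
Variable p : R.
Hypothesis hp : 1 < p.

Definition zp x : C := (RtoC x + Ci * RtoC (/ p))%C.
Definition wp x : C := (RtoC PI * zp x)%C.
Definition sinh_wp x : C := Csinh (wp x).
Definition cosh_wp x : C := ((Cexp (wp x) + Cexp (- wp x)) / RtoC 2)%C.
Definition coth_wp x : C := (cosh_wp x * r_p p x)%C.
Definition phase s x : C := Cexp (Ci * RtoC s * zp x).

Definition kern s x : C := (phase s x * r_p p x)%C.

(* [kern_logderiv] is [d/dx log kern], and [kern_logderiv_dx] its [x]-derivative. *)
Definition kern_logderiv s x : C := (Ci * RtoC s - RtoC PI * coth_wp x)%C.
Definition kern_logderiv_dx x : C :=
  (- RtoC PI * (RtoC PI - RtoC PI * coth_wp x * coth_wp x))%C.

Lemma inv_p_pos : 0 < / p.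
Proof. apply Rinv_0_lt_compat; lra. Qed.

Lemma inv_p_lt_1 : / p < 1.
Proof. rewrite <- Rinv_1. apply Rinv_lt_contravar; lra. Qed.

Lemma sin_PI_inv_p_pos : 0 < sin (PI * / p).
Proof.
  pose proof PI_RGT_0. pose proof inv_p_pos. pose proof inv_p_lt_1.
  apply sin_gt_0; nra.
Qed.

Lemma wp_eq x : wp x = (PI * x, PI * / p).
Proof. unfold wp, zp. apply injective_projections; simpl; ring. Qed.

Lemma sinh_wp_eq x : sinh_wp x = (sinh (PI * x) * cos (PI * / p), cosh (PI * x) * sin (PI * / p)).
Proof.
  unfold sinh_wp, Csinh. rewrite wp_eq. unfold Cexp, sinh, cosh, Cdiv.
  apply injective_projections; simpl; rewrite ?cos_neg, ?sin_neg; field.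
Qed.

Lemma cosh_wp_eq x : cosh_wp x = (cosh (PI * x) * cos (PI * / p), sinh (PI * x) * sin (PI * / p)).
Proof.
  unfold cosh_wp. rewrite wp_eq. unfold Cexp, sinh, cosh, Cdiv.
  apply injective_projections; simpl; rewrite ?cos_neg, ?sin_neg; field.
Qed.

Lemma sinh_wp_mod_ge x : sin (PI * / p) * cosh (PI * x) <= Cmod (sinh_wp x).
Proof.
  rewrite sinh_wp_eq. unfold Cmod. cbn [fst snd].
  pose proof sin_PI_inv_p_pos; pose proof (cosh_pos (PI * x)).
  rewrite <- (sqrt_pow2 (sin (PI * / p) * cosh (PI * x))) by nra.
  apply sqrt_le_1_alt. nra.
Qed.

Lemma sinh_wp_neq_0 x : sinh_wp x <> 0%C.
Proof.
  intros H. pose proof (sinh_wp_mod_ge x). rewrite H, Cmod_0 in H0.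
  pose proof sin_PI_inv_p_pos; pose proof (cosh_pos (PI * x)). nra.
Qed.

Lemma cosh_wp_mod_le x : Cmod (cosh_wp x) <= cosh (PI * x).
Proof.
  rewrite cosh_wp_eq. unfold Cmod. cbn [fst snd].
  pose proof (cosh_pos (PI * x)). pose proof (sqr_sinh_le_sqr_cosh (PI * x)).
  pose proof (sin2_cos2 (PI * / p)). unfold Rsqr in *.
  apply Rle_trans with (sqrt (cosh (PI * x) ^ 2)); [|rewrite sqrt_pow2; lra].
  apply sqrt_le_1_alt.
  assert (0 <= sin (PI * / p) ^ 2) by nra.
  assert (sinh (PI * x) ^ 2 * sin (PI * / p) ^ 2 <= cosh (PI * x) ^ 2 * sin (PI * / p) ^ 2)
    by (apply Rmult_le_compat_r; auto).
  nra.
Qed.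

Lemma Cderiv_zp : Cderiv zp (fun _ => 1%C).
Proof.
  eapply Cderiv_ext; [| |apply (Cderiv_plus _ _ _ _ Cderiv_id (Cderiv_const (Ci * RtoC (/ p))))];
    intros; unfold zp; cbv beta; ring.
Qed.

Lemma Cderiv_wp : Cderiv wp (fun _ => RtoC PI).
Proof.
  eapply Cderiv_ext; [| |apply (Cderiv_mult _ _ _ _ (Cderiv_const (RtoC PI)) Cderiv_zp)];
    intros; unfold wp; cbv beta; ring.
Qed.

Lemma Cderiv_sinh_wp : Cderiv sinh_wp (fun y => RtoC PI * cosh_wp y)%C.
Proof.
  eapply Cderiv_ext; [| |apply (Cderiv_mult _ _ _ _ (Cderiv_minus _ _ _ _
    (Cderiv_exp _ _ Cderiv_wp) (Cderiv_exp _ _ (Cderiv_opp _ _ Cderiv_wp))) (Cderiv_const (/ RtoC 2)))];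
    intros; unfold sinh_wp, Csinh, cosh_wp, Cdiv; cbv beta; ring.
Qed.

Lemma Cderiv_cosh_wp : Cderiv cosh_wp (fun y => RtoC PI * sinh_wp y)%C.
Proof.
  eapply Cderiv_ext; [| |apply (Cderiv_mult _ _ _ _ (Cderiv_plus _ _ _ _
    (Cderiv_exp _ _ Cderiv_wp) (Cderiv_exp _ _ (Cderiv_opp _ _ Cderiv_wp))) (Cderiv_const (/ RtoC 2)))];
    intros; unfold sinh_wp, Csinh, cosh_wp, Cdiv; cbv beta; ring.
Qed.

Lemma Cderiv_r_p : Cderiv (r_p p) (fun y => - RtoC PI * coth_wp y * r_p p y)%C.
Proof.
  eapply Cderiv_ext; [| |apply (Cderiv_inv _ _ Cderiv_sinh_wp sinh_wp_neq_0)];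
    intros; unfold coth_wp; try reflexivity.
  change (r_p p t) with (/ sinh_wp t)%C. pose proof (sinh_wp_neq_0 t). field. auto.
Qed.

Lemma Cderiv_coth_wp : Cderiv coth_wp (fun y => RtoC PI - RtoC PI * coth_wp y * coth_wp y)%C.
Proof.
  eapply Cderiv_ext; [| |apply (Cderiv_mult _ _ _ _ Cderiv_cosh_wp Cderiv_r_p)];
    intros; unfold coth_wp; try reflexivity.
  change (r_p p t) with (/ sinh_wp t)%C. pose proof (sinh_wp_neq_0 t). field. auto.
Qed.

Lemma Cderiv_kern_x s : Cderiv (kern s) (fun y => kern_logderiv s y * kern s y)%C.
Proof.
  eapply Cderiv_ext; [| |apply (Cderiv_mult _ _ _ _ (Cderiv_exp _ _
    (Cderiv_mult _ _ _ _ (Cderiv_const (Ci * RtoC s)) Cderiv_zp)) Cderiv_r_p)];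
    intros; unfold kern, phase, kern_logderiv, coth_wp; cbv beta; ring.
Qed.

Lemma Cderiv_mul_kern_x s P P' : Cderiv P P' ->
  Cderiv (fun y => P y * kern s y)%C (fun y => (P' y + P y * kern_logderiv s y) * kern s y)%C.
Proof.
  intros H. eapply Cderiv_ext; [| |apply (Cderiv_mult _ _ _ _ H (Cderiv_kern_x s))];
    intros; cbv beta; ring.
Qed.

Lemma Cderiv_kern_logderiv_x s : Cderiv (kern_logderiv s) kern_logderiv_dx.
Proof.
  eapply Cderiv_ext; [| |apply (Cderiv_minus _ _ _ _ (Cderiv_const (Ci * RtoC s))
    (Cderiv_mult _ _ _ _ (Cderiv_const (RtoC PI)) Cderiv_coth_wp))];
    intros; unfold kern_logderiv, kern_logderiv_dx; cbv beta; ring.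
Qed.

Lemma Cderiv_mul_kern_s x P P' : Cderiv P P' ->
  Cderiv (fun t => P t * kern t x)%C (fun t => (P' t + P t * (Ci * zp x)) * kern t x)%C.
Proof.
  intros H. eapply Cderiv_ext; [| |apply (Cderiv_mult _ _ _ _ H (Cderiv_mult _ _ _ _
    (Cderiv_exp _ _ (Cderiv_mult _ _ _ _ (Cderiv_mult _ _ _ _ (Cderiv_const Ci) Cderiv_id)
    (Cderiv_const (zp x)))) (Cderiv_const (r_p p x))))];
    intros; unfold kern, phase; cbv beta; ring.
Qed.

Lemma Cderiv_kern_logderiv_s x : Cderiv (fun t => kern_logderiv t x) (fun _ => Ci).
Proof.
  eapply Cderiv_ext; [| |apply (Cderiv_minus _ _ _ _ (Cderiv_mult _ _ _ _ (Cderiv_const Ci) Cderiv_id)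
    (Cderiv_const (RtoC PI * coth_wp x)))];
    intros; unfold kern_logderiv; cbv beta; ring.
Qed.
End Kernel.

Lemma exp_INR_mult n y : exp (INR n * y) = exp y ^ n.
Proof.
  induction n as [|n IH].
  - simpl. rewrite Rmult_0_l. apply exp_0.
  - rewrite S_INR. simpl. rewrite <- IH, <- exp_plus. f_equal. ring.
Qed.

(* From [1 + a/n <= exp (a/n)]. *)
Lemma pow_1_plus_le_exp n a : 0 <= a -> (1 + a) ^ n <= INR n ^ n * exp a.
Proof.
  intros Ha. destruct n as [|n]; [simpl; pose proof (exp_ineq1_le a); lra|].
  set (m := INR (S n)). assert (Hm : 1 <= m) by (unfold m; rewrite S_INR; pose proof (pos_INR n); lra).
  replace (exp a) with (exp (a / m) ^ S n)
    by (rewrite <- exp_INR_mult; fold m; f_equal; field; lra).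
  rewrite <- Rpow_mult_distr. apply pow_incr. split; [lra|].
  pose proof (exp_ineq1_le (a / m)).
  replace (1 + a) with (m * (1 + a / m) - (m - 1)) by (field; lra).
  assert (m * (1 + a / m) <= m * exp (a / m)) by (apply Rmult_le_compat_l; lra). lra.
Qed.

Lemma pow_mul_1_sq_le_cosh N x :
  (1 + Rabs x) ^ N * (1 + x ^ 2) <= 2 * INR (N + 2) ^ (N + 2) * cosh (PI * x).
Proof.
  set (a := 1 + Rabs x). set (D := INR (N + 2) ^ (N + 2)).
  assert (Ha : 1 <= a) by (unfold a; pose proof (Rabs_pos x); lra).
  assert (HD : 0 < D) by (apply pow_lt; rewrite plus_INR; simpl; pose proof (pos_INR N); lra).
  assert (1 + x ^ 2 <= a ^ 2) by (unfold a; rewrite <- (pow2_abs x); pose proof (Rabs_pos x); nra).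
  assert (a ^ N * (1 + x ^ 2) <= a ^ (N + 2))
    by (rewrite pow_add; apply Rmult_le_compat_l; auto; apply pow_le; lra).
  pose proof (pow_1_plus_le_exp (N + 2) (Rabs x) (Rabs_pos x)) as Hexp. fold a D in Hexp.
  pose proof (exp_abs_le_2_cosh_PI x).
  assert (D * exp (Rabs x) <= D * (2 * cosh (PI * x))) by (apply Rmult_le_compat_l; lra).
  lra.
Qed.

Lemma Rdiv_le_cross X Y u v : 0 < u -> 0 < v -> X * v <= Y * u -> X / u <= Y / v.
Proof.
  intros Hu Hv H. apply (Rmult_le_reg_r (u * v)); [nra|].
  replace (X / u * (u * v)) with (X * v) by (field; lra).
  replace (Y / v * (u * v)) with (Y * u) by (field; lra). auto.
Qed.

Lemma Cmod_mult_pow (V : R) m n (a b : C) :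
  0 <= V -> Cmod a <= V ^ m -> Cmod b <= V ^ n -> Cmod (a * b)%C <= V ^ (m + n).
Proof. intros HV H1 H2. rewrite Cmod_mult, pow_add. apply Rmult_le_compat; auto using Cmod_ge_0. Qed.

Lemma Cmod_plus_pow (V : R) m n (a b : C) :
  2 <= V -> Cmod a <= V ^ m -> Cmod b <= V ^ n -> Cmod (a + b)%C <= V ^ S (Nat.max m n).
Proof.
  intros HV H1 H2. eapply Rle_trans; [apply Cmod_triangle|].
  assert (V ^ m <= V ^ Nat.max m n) by (apply Rle_pow; [lra | lia]).
  assert (V ^ n <= V ^ Nat.max m n) by (apply Rle_pow; [lra | lia]).
  assert (0 <= V ^ Nat.max m n) by (apply pow_le; lra). simpl. nra.
Qed.

Lemma Cmod_opp_pow (V : R) m (a : C) : Cmod a <= V ^ m -> Cmod (- a)%C <= V ^ m.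
Proof. now rewrite Cmod_opp. Qed.

Lemma Cmod_minus_pow (V : R) m n (a b : C) :
  2 <= V -> Cmod a <= V ^ m -> Cmod b <= V ^ n -> Cmod (a - b)%C <= V ^ S (Nat.max m n).
Proof. intros. apply Cmod_plus_pow; auto. now apply Cmod_opp_pow. Qed.

Lemma Cmod_le_pow_1 (V : R) (a : C) : Cmod a <= V -> Cmod a <= V ^ 1.
Proof. now rewrite pow_1. Qed.

Ltac Cmod_poly_bound hV :=
  lazymatch goal with
  | |- Cmod (?a * ?b)%C <= _ =>
      eapply Cmod_mult_pow; [lra | Cmod_poly_bound hV | Cmod_poly_bound hV]
  | |- Cmod (?a - ?b)%C <= _ =>
      eapply Cmod_minus_pow; [exact hV | Cmod_poly_bound hV | Cmod_poly_bound hV]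
  | |- Cmod (?a + ?b)%C <= _ =>
      eapply Cmod_plus_pow; [exact hV | Cmod_poly_bound hV | Cmod_poly_bound hV]
  | |- Cmod (- ?a)%C <= _ => eapply Cmod_opp_pow; Cmod_poly_bound hV
  | |- _ => eapply Cmod_le_pow_1; assumption
  end.

Section KernelBounds.
Variables (p K : R).
Hypotheses (hp : 1 < p) (HK : 0 <= K).

Let sin_p_pos := sin_PI_inv_p_pos p hp.

Definition atom_const := K + PI + / sin (PI * / p) + 2.
Definition atom_bound x := atom_const * (1 + Rabs x).

Lemma atom_bound_ge x : K + PI + / sin (PI * / p) + 2 <= atom_bound x.
Proof.
  pose proof PI_RGT_0. pose proof (Rinv_0_lt_compat _ sin_p_pos). pose proof (Rabs_pos x).
  unfold atom_bound, atom_const. nra.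
Qed.

Lemma atom_bound_ge_2 x : 2 <= atom_bound x.
Proof.
  pose proof (atom_bound_ge x). pose proof PI_RGT_0.
  pose proof (Rinv_0_lt_compat _ sin_p_pos). lra.
Qed.

Lemma Cmod_Ci_le x : Cmod Ci <= atom_bound x.
Proof.
  replace (Cmod Ci) with 1; [pose proof (atom_bound_ge_2 x); lra|].
  unfold Cmod, Ci; simpl. replace (0 * (0 * 1) + 1 * (1 * 1)) with 1 by ring.
  now rewrite sqrt_1.
Qed.

Lemma Cmod_param_le s x : Rabs s <= K -> Cmod (RtoC s) <= atom_bound x.
Proof.
  intros Hs. rewrite Cmod_R. pose proof (atom_bound_ge x). pose proof PI_RGT_0.
  pose proof (Rinv_0_lt_compat _ sin_p_pos). lra.
Qed.

Lemma Cmod_PI_le x : Cmod (RtoC PI) <= atom_bound x.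
Proof.
  pose proof PI_RGT_0. rewrite Cmod_R, Rabs_pos_eq by lra. pose proof (atom_bound_ge x).
  pose proof (Rinv_0_lt_compat _ sin_p_pos). lra.
Qed.

Lemma Cmod_1_le x : Cmod 1%C <= atom_bound x.
Proof. rewrite Cmod_1. pose proof (atom_bound_ge_2 x). lra. Qed.

Lemma Cmod_r_p_le x : Cmod (r_p p x) <= / (sin (PI * / p) * cosh (PI * x)).
Proof.
  change (r_p p x) with (/ sinh_wp p x)%C.
  rewrite Cmod_inv by (apply sinh_wp_neq_0; auto).
  pose proof (cosh_pos (PI * x)).
  apply Rinv_le_contravar; [nra | apply sinh_wp_mod_ge; auto].
Qed.

Lemma Cmod_coth_le x : Cmod (coth_wp p x) <= atom_bound x.
Proof.
  unfold coth_wp. rewrite Cmod_mult.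
  pose proof (cosh_wp_mod_le p x). pose proof (Cmod_r_p_le x). pose proof (cosh_pos (PI * x)).
  assert (Cmod (cosh_wp p x) * Cmod (r_p p x) <= cosh (PI * x) * / (sin (PI * / p) * cosh (PI * x)))
    by (apply Rmult_le_compat; auto using Cmod_ge_0).
  replace (cosh (PI * x) * / (sin (PI * / p) * cosh (PI * x))) with (/ sin (PI * / p)) in *
    by (field; lra).
  pose proof (atom_bound_ge x). pose proof PI_RGT_0. lra.
Qed.

Lemma Cmod_zp_le x : Cmod (zp p x) <= atom_bound x.
Proof.
  eapply Rle_trans; [apply Cmod_le_abs_sum|]. unfold zp; simpl.
  replace (x + (0 * / p - 1 * 0)) with x by ring.
  replace (0 + (0 * 0 + 1 * / p)) with (/ p) by ring.
  pose proof (inv_p_pos p hp); pose proof (inv_p_lt_1 p hp). rewrite (Rabs_pos_eq (/ p)) by lra.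
  pose proof (atom_bound_ge x). pose proof (Rabs_pos x). pose proof PI_RGT_0.
  pose proof (Rinv_0_lt_compat _ sin_p_pos). unfold atom_bound, atom_const in *. nra.
Qed.

Lemma Cmod_phase_le s x : Rabs s <= K -> Cmod (phase p s x) <= exp K.
Proof.
  intros Hs. unfold phase. rewrite Cmod_Cexp. apply exp_le_exp.
  replace (fst (Ci * RtoC s * zp p x)%C) with (- s * / p) by (unfold zp; simpl; ring).
  pose proof (inv_p_pos p hp); pose proof (inv_p_lt_1 p hp). apply Rabs_le_between in Hs. nra.
Qed.

(* The exponential decay of [r_p] beats any power of [atom_bound x]. *)
Lemma poly_mul_kern_bound N : exists BN, 0 < BN /\ forall s x (P : C), Rabs s <= K ->
  Cmod P <= atom_bound x ^ N -> Cmod (P * kern p s x)%C <= BN / (1 + x ^ 2).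
Proof.
  set (T := atom_const). set (sq := sin (PI * / p)).
  set (D := INR (N + 2) ^ (N + 2)).
  assert (HD : 0 < D) by (apply pow_lt; rewrite plus_INR; simpl; pose proof (pos_INR N); lra).
  assert (Hsq : 0 < sq) by exact sin_p_pos.
  assert (HT : 2 <= T)
    by (unfold T, atom_const; fold sq; pose proof PI_RGT_0; pose proof (Rinv_0_lt_compat _ Hsq); lra).
  exists (T ^ N * exp K * / sq * (2 * D)). split.
  { pose proof (exp_pos K). pose proof (Rinv_0_lt_compat _ Hsq). pose proof (pow_lt T N ltac:(lra)).
    repeat apply Rmult_lt_0_compat; lra. }
  intros s x P Hs HP. unfold kern. rewrite !Cmod_mult.
  pose proof (Cmod_phase_le s x Hs) as HE. pose proof (Cmod_r_p_le x) as Hr.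
  pose proof (cosh_pos (PI * x)) as Hch.
  set (a := 1 + Rabs x). assert (Ha : 1 <= a) by (unfold a; pose proof (Rabs_pos x); lra).
  pose proof (pow_mul_1_sq_le_cosh N x) as Hpoly. fold a D in Hpoly.
  replace (atom_bound x ^ N) with (T ^ N * a ^ N) in HP by (symmetry; apply Rpow_mult_distr).
  assert (Hprod : Cmod P * Cmod (phase p s x) * Cmod (r_p p x)
      <= (T ^ N * a ^ N) * exp K * / (sq * cosh (PI * x))).
  { apply Rmult_le_compat; try apply Rmult_le_pos; auto using Cmod_ge_0.
    apply Rmult_le_compat; auto using Cmod_ge_0. }
  rewrite <- Rmult_assoc. eapply Rle_trans; [exact Hprod|].
  replace (T ^ N * a ^ N * exp K * / (sq * cosh (PI * x)))
    with ((T ^ N * exp K * / sq) * (a ^ N / cosh (PI * x))) by (field; lra).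
  replace (T ^ N * exp K * / sq * (2 * D) / (1 + x ^ 2))
    with ((T ^ N * exp K * / sq) * ((2 * D) / (1 + x ^ 2))) by (field; nra).
  apply Rmult_le_compat_l.
  { pose proof (exp_pos K). pose proof (Rinv_0_lt_compat _ Hsq). pose proof (pow_lt T N ltac:(lra)).
    apply Rmult_le_pos; [apply Rmult_le_pos|]; lra. }
  apply Rdiv_le_cross; auto; nra.
Qed.

(* The [s]- and [x]-derivatives of [kern] are [kern] times the prefactors
   [pre_*]; the suffix records the derivatives taken. *)
Definition kern_with (P : R -> R -> C) s x : C := (P s x * kern p s x)%C.

Definition pre_one (s x : R) : C := 1%C.
Definition pre_x s x : C := kern_logderiv p s x.
Definition pre_xx s x : C := (kern_logderiv_dx p x + kern_logderiv p s x * kern_logderiv p s x)%C.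
Definition pre_s (s x : R) : C := (Ci * zp p x)%C.
Definition pre_ss (s x : R) : C := (Ci * zp p x * (Ci * zp p x))%C.
Definition pre_sx s x : C := (Ci + Ci * zp p x * kern_logderiv p s x)%C.
Definition pre_sxx s x : C :=
  (Ci * kern_logderiv p s x + kern_logderiv p s x * Ci
   + (kern_logderiv_dx p x + kern_logderiv p s x * kern_logderiv p s x) * (Ci * zp p x))%C.
Definition pre_ssx s x : C :=
  (Ci * zp p x * Ci + (Ci + Ci * zp p x * kern_logderiv p s x) * (Ci * zp p x))%C.

Lemma dx_pre_one s : Cderiv (kern_with pre_one s) (kern_with pre_x s).
Proof.
  eapply Cderiv_ext; [| |apply (Cderiv_mul_kern_x p hp s _ _ (Cderiv_const 1%C))];
    intros; unfold kern_with, pre_one, pre_x; cbv beta; ring.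
Qed.

Lemma dx_pre_x s : Cderiv (kern_with pre_x s) (kern_with pre_xx s).
Proof.
  eapply Cderiv_ext; [| |apply (Cderiv_mul_kern_x p hp s _ _ (Cderiv_kern_logderiv_x p hp s))];
    intros; unfold kern_with, pre_x, pre_xx; cbv beta; ring.
Qed.

Lemma dx_pre_s s : Cderiv (kern_with pre_s s) (kern_with pre_sx s).
Proof.
  eapply Cderiv_ext; [| |apply (Cderiv_mul_kern_x p hp s _ _
    (Cderiv_mult _ _ _ _ (Cderiv_const Ci) (Cderiv_zp p)))];
    intros; unfold kern_with, pre_s, pre_sx; cbv beta; ring.
Qed.

Lemma dx_pre_sx s : Cderiv (kern_with pre_sx s) (kern_with pre_sxx s).
Proof.
  eapply Cderiv_ext; [| |apply (Cderiv_mul_kern_x p hp s _ _ (Cderiv_plus _ _ _ _ (Cderiv_const Ci)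
    (Cderiv_mult _ _ _ _ (Cderiv_mult _ _ _ _ (Cderiv_const Ci) (Cderiv_zp p))
    (Cderiv_kern_logderiv_x p hp s))))];
    intros; unfold kern_with, pre_sx, pre_sxx; cbv beta; ring.
Qed.

Lemma ds_pre_one x : Cderiv (fun t => kern_with pre_one t x) (fun t => kern_with pre_s t x).
Proof.
  eapply Cderiv_ext; [| |apply (Cderiv_mul_kern_s p x _ _ (Cderiv_const 1%C))];
    intros; unfold kern_with, pre_one, pre_s; cbv beta; ring.
Qed.

Lemma ds_pre_x x : Cderiv (fun t => kern_with pre_x t x) (fun t => kern_with pre_sx t x).
Proof.
  eapply Cderiv_ext; [| |apply (Cderiv_mul_kern_s p x _ _ (Cderiv_kern_logderiv_s p x))];
    intros; unfold kern_with, pre_x, pre_sx; cbv beta; ring.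
Qed.

Lemma ds_pre_xx x : Cderiv (fun t => kern_with pre_xx t x) (fun t => kern_with pre_sxx t x).
Proof.
  eapply Cderiv_ext; [| |apply (Cderiv_mul_kern_s p x _ _ (Cderiv_plus _ _ _ _
    (Cderiv_const (kern_logderiv_dx p x))
    (Cderiv_mult _ _ _ _ (Cderiv_kern_logderiv_s p x) (Cderiv_kern_logderiv_s p x))))];
    intros; unfold kern_with, pre_xx, pre_sxx; cbv beta; ring.
Qed.

Lemma ds_pre_s x : Cderiv (fun t => kern_with pre_s t x) (fun t => kern_with pre_ss t x).
Proof.
  eapply Cderiv_ext; [| |apply (Cderiv_mul_kern_s p x _ _ (Cderiv_const (Ci * zp p x)%C))];
    intros; unfold kern_with, pre_s, pre_ss; cbv beta; ring.
Qed.

Lemma ds_pre_sx x : Cderiv (fun t => kern_with pre_sx t x) (fun t => kern_with pre_ssx t x).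
Proof.
  eapply Cderiv_ext; [| |apply (Cderiv_mul_kern_s p x _ _ (Cderiv_plus _ _ _ _ (Cderiv_const Ci)
    (Cderiv_mult _ _ _ _ (Cderiv_const (Ci * zp p x)%C) (Cderiv_kern_logderiv_s p x))))];
    intros; unfold kern_with, pre_sx, pre_ssx; cbv beta; ring.
Qed.

Definition poly_bounded (P : R -> R -> C) : Prop :=
  exists N, forall s x, Rabs s <= K -> Cmod (P s x) <= atom_bound x ^ N.

Ltac prove_poly_bounded :=
  eexists; intros s x Hs;
  pose proof (Cmod_Ci_le x); pose proof (Cmod_param_le s x Hs); pose proof (Cmod_PI_le x);
  pose proof (Cmod_coth_le x); pose proof (Cmod_zp_le x); pose proof (Cmod_1_le x);
  pose proof (atom_bound_ge_2 x) as hV;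
  unfold pre_s, pre_ss, pre_sx, pre_sxx, pre_ssx, kern_logderiv, kern_logderiv_dx;
  Cmod_poly_bound hV.

Lemma kern_with_decay P : poly_bounded P ->
  exists B, 0 < B /\ forall s x, Rabs s <= K -> Cmod (kern_with P s x) <= B / (1 + x ^ 2).
Proof.
  intros [N HN]. destruct (poly_mul_kern_bound N) as [B [HB HP]].
  exists B; split; auto. intros s x Hs. apply HP; auto.
Qed.

Lemma kern_with_smooth_family (pr : C -> R) : pr = fst \/ pr = snd -> exists B,
  smooth_family (fun s x => pr (kern_with pre_one s x)) (fun s x => pr (kern_with pre_s s x))
    (fun s x => pr (kern_with pre_x s x)) (fun s x => pr (kern_with pre_sx s x))
    (fun s x => pr (kern_with pre_xx s x)) (fun s x => pr (kern_with pre_sxx s x))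
    (fun s x => pr (kern_with pre_ss s x)) (fun s x => pr (kern_with pre_ssx s x)) K B.
Proof.
  intros Hpr.
  assert (Hprd : forall f f', Cderiv f f' -> forall y, derivable_pt_lim (fun t => pr (f t)) y (pr (f' y)))
    by (destruct Hpr as [-> | ->]; intros f f' H y; apply H).
  assert (Hprb : forall z, Rabs (pr z) <= Cmod z).
  { intros z. eapply Rle_trans; [|apply Rmax_Cmod].
    destruct Hpr as [-> | ->]; [apply Rmax_l | apply Rmax_r]. }
  destruct (kern_with_decay pre_s ltac:(prove_poly_bounded)) as [B1 [H1 b1]].
  destruct (kern_with_decay pre_ss ltac:(prove_poly_bounded)) as [B2 [H2 b2]].
  destruct (kern_with_decay pre_sx ltac:(prove_poly_bounded)) as [B3 [H3 b3]].
  destruct (kern_with_decay pre_sxx ltac:(prove_poly_bounded)) as [B4 [H4 b4]].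
  destruct (kern_with_decay pre_ssx ltac:(prove_poly_bounded)) as [B5 [H5 b5]].
  set (B := B1 + B2 + B3 + B4 + B5). exists B.
  assert (Hle : forall Bi P s x, 0 < Bi -> Bi <= B ->
      Cmod (kern_with P s x) <= Bi / (1 + x ^ 2) -> Rabs (pr (kern_with P s x)) <= B / (1 + x ^ 2)).
  { intros Bi P s x HBi HBiB Hb. eapply Rle_trans; [apply Hprb | eapply Rle_trans; [exact Hb|]].
    unfold Rdiv. apply Rmult_le_compat_r; auto. left; apply inv_1_sq_pos. }
  assert (Hw1 : forall x, B / (1 + x ^ 2) <= B)
    by (intros; unfold Rdiv; pose proof (inv_1_sq_le_1 x); pose proof (inv_1_sq_pos x); unfold B; nra).
  split; intros sg x; try intros Hs.
  - apply (Hprd _ _ (ds_pre_one x)).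
  - apply (Hprd _ _ (ds_pre_x x)).
  - apply (Hprd _ _ (ds_pre_xx x)).
  - apply (Hprd _ _ (ds_pre_s x)).
  - apply (Hprd _ _ (ds_pre_sx x)).
  - apply (Hprd _ _ (dx_pre_one sg)).
  - apply (Hprd _ _ (dx_pre_x sg)).
  - apply (Hprd _ _ (dx_pre_s sg)).
  - apply (Hprd _ _ (dx_pre_sx sg)).
  - eapply Rle_trans; [apply (Hle B1); auto; unfold B; lra | apply Hw1].
  - eapply Rle_trans; [apply (Hle B2); auto; unfold B; lra | apply Hw1].
  - apply (Hle B3); auto; unfold B; lra.
  - apply (Hle B4); auto; unfold B; lra.
  - apply (Hle B5); auto; unfold B; lra.
Qed.
End KernelBounds.

Lemma derivable_pt_lim_eps f t l : derivable_pt_lim f t l ->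
  forall eps, 0 < eps -> exists delta, 0 < delta /\
    forall s, Rabs (s - t) < delta -> Rabs (f s - f t) < eps.
Proof.
  intros H. assert (Hc : continuity_pt f t) by (apply derivable_continuous_pt; exists l; auto).
  intros eps He. destruct (Hc eps He) as [alp [Ha Hf]]. exists alp; split; auto.
  intros s Hs. destruct (Req_dec s t) as [-> | Hne].
  - rewrite Rminus_eq_0, Rabs_R0; auto.
  - apply (Hf s). split; [split; [exact I | auto] | simpl; unfold R_dist; auto].
Qed.

Lemma Cmod_RtoC_minus a b : Cmod (RtoC a - RtoC b)%C = Rabs (a - b).
Proof. rewrite <- RtoC_minus. apply Cmod_R. Qed.

Section Exponent.
Variables (alpha alpha' beta : R -> R) (M : R).
Hypotheses (Hpos : forall t, 0 < t -> 0 < alpha t)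
  (Hbeta : forall s, 0 < s -> 0 < beta s /\ alpha (beta s) = s)
  (Hd : forall t, 0 < t -> derivable_pt_lim alpha t (alpha' t) /\ 0 < alpha' t)
  (HM : forall t, 0 < t -> Rabs (ln (alpha' t)) <= M).

Lemma alpha'_bounds t : 0 < t -> exp (- M) <= alpha' t <= exp M.
Proof.
  intros Ht. destruct (Hd t Ht) as [_ Hp]. pose proof (HM t Ht) as H.
  apply Rabs_le_between in H.
  rewrite <- (exp_ln (alpha' t)) by auto. split; apply exp_le_exp; lra.
Qed.

Lemma alpha_incr_bounds u t : 0 < u -> u < t ->
  exp (- M) * (t - u) <= alpha t - alpha u <= exp M * (t - u).
Proof.
  intros Hu Hut. destruct (MVT_cor2 alpha alpha' u t Hut) as [c [-> Hc]].
  { intros c Hc. apply Hd. lra. }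
  pose proof (alpha'_bounds c ltac:(lra)). split; apply Rmult_le_compat_r; lra.
Qed.

Lemma alpha_le_mono u t : 0 < u -> u <= t -> alpha u <= alpha t.
Proof.
  intros Hu [H | <-]; [|lra].
  pose proof (alpha_incr_bounds u t Hu H). pose proof (exp_pos (- M)). nra.
Qed.

(* [alpha] maps [(0,oo)] increasingly onto itself, so [alpha (0+) = 0]; the
   bounds on [alpha'] then integrate from [0]. *)
Lemma alpha_le_exp_mul t : 0 < t -> alpha t <= exp M * t.
Proof.
  intros Ht. apply Rnot_lt_le. intros Hc.
  set (y := (alpha t - exp M * t) / 2). assert (Hy : 0 < y) by (unfold y; lra).
  destruct (Hbeta y Hy) as [Hb1 Hb2].
  set (u := Rmin (beta y) (t / 2)).
  assert (Hu : 0 < u) by (unfold u; apply Rmin_pos; lra).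
  assert (Hut : u < t) by (unfold u; pose proof (Rmin_r (beta y) (t / 2)); lra).
  assert (alpha u <= y) by (rewrite <- Hb2; apply alpha_le_mono; auto; apply Rmin_l).
  pose proof (alpha_incr_bounds u t Hu Hut). pose proof (exp_pos M). unfold y in *. nra.
Qed.

Lemma exp_opp_mul_le_alpha t : 0 < t -> exp (- M) * t <= alpha t.
Proof.
  intros Ht. apply Rnot_lt_le. intros Hc. pose proof (exp_pos (- M)) as He.
  set (d := exp (- M) * t - alpha t). assert (Hd0 : 0 < d) by (unfold d; lra).
  set (u := Rmin (t / 2) (d / (2 * exp (- M)))).
  assert (Hu : 0 < u) by (unfold u; apply Rmin_pos; [lra | apply Rdiv_lt_0_compat; lra]).
  assert (Hut : u < t) by (unfold u; pose proof (Rmin_l (t / 2) (d / (2 * exp (- M)))); lra).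
  assert (Hu2 : exp (- M) * u <= d / 2).
  { replace (d / 2) with (exp (- M) * (d / (2 * exp (- M)))) by (field; lra).
    apply Rmult_le_compat_l; [lra | apply Rmin_r]. }
  pose proof (alpha_incr_bounds u t Hu Hut). pose proof (Hpos u Hu). unfold d in *. nra.
Qed.

Lemma alpha_ratio_bounds t : 0 < t -> exp (- M) <= alpha t / t <= exp M.
Proof.
  intros Ht. pose proof (alpha_le_exp_mul t Ht); pose proof (exp_opp_mul_le_alpha t Ht).
  split; apply (Rmult_le_reg_r t); auto; unfold Rdiv;
    rewrite Rmult_assoc, Rinv_l, Rmult_1_r by lra; lra.
Qed.

Lemma exponent_bound t : 0 < t -> Rabs (exponent alpha t) <= M.
Proof.
  intros Ht. unfold exponent. pose proof (alpha_ratio_bounds t Ht) as [H1 H2].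
  pose proof (exp_pos (- M)). apply Rabs_le. split.
  - rewrite <- (ln_exp (- M)). apply ln_le; auto.
  - rewrite <- (ln_exp M). apply ln_le; lra.
Qed.

Lemma exponent_derivable t : 0 < t -> exists l, derivable_pt_lim (exponent alpha) t l.
Proof.
  intros Ht. destruct (Hd t Ht) as [Hd1 _]. pose proof (alpha_ratio_bounds t Ht) as [H1 _].
  pose proof (exp_pos (- M)). eexists. unfold exponent.
  apply (derive_comp ln (div_fct alpha (fun s => s))).
  - apply (derivable_pt_lim_div alpha (fun s => s) t (alpha' t) 1 Hd1 (derive_id t)). lra.
  - apply derivable_pt_lim_ln. unfold div_fct. lra.
Qed.

(* [alpha t / t] is a weighted mean of [alpha (lam t) / (lam t)] and of the
   slope of [alpha] on [[lam t, t]]. *)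
Lemma alpha_ratio_near_deriv lam t : 0 < lam < 1 -> 0 < t -> exists xi, lam * t < xi < t /\
  Rabs (alpha t / t - alpha' t) <= Rabs (alpha' xi - alpha' t) + 2 * lam * exp M.
Proof.
  intros Hl Ht. assert (Hlt : lam * t < t) by nra. assert (Hl0 : 0 < lam * t) by nra.
  destruct (MVT_cor2 alpha alpha' (lam * t) t Hlt) as [xi [E Hxi]].
  { intros c Hc. apply Hd. lra. }
  exists xi; split; auto.
  pose proof (alpha_le_exp_mul (lam * t) Hl0). pose proof (Hpos (lam * t) Hl0).
  pose proof (alpha'_bounds xi ltac:(lra)) as [Hx1 Hx2].
  assert (Hr : alpha t / t = alpha (lam * t) / t + alpha' xi * (1 - lam)).
  { replace (alpha t) with (alpha (lam * t) + alpha' xi * (t - lam * t)) by lra. field. lra. }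
  rewrite Hr.
  assert (0 <= alpha (lam * t) / t <= lam * exp M).
  { split; [apply Rmult_le_pos; [lra | left; apply Rinv_0_lt_compat; auto]|].
    apply (Rmult_le_reg_r t); auto. unfold Rdiv. rewrite Rmult_assoc, Rinv_l by lra. lra. }
  replace (alpha (lam * t) / t + alpha' xi * (1 - lam) - alpha' t) with
    ((alpha' xi - alpha' t) + (alpha (lam * t) / t - lam * alpha' xi)) by ring.
  eapply Rle_trans; [apply Rabs_triang|]. apply Rplus_le_compat_l.
  pose proof (exp_pos (- M)). assert (0 <= lam * alpha' xi <= lam * exp M) by (split; nra).
  apply Rabs_le. lra.
Qed.

Lemma ln_lipschitz a b : exp (- M) <= a -> exp (- M) <= b ->
  Rabs (ln a - ln b) <= exp M * Rabs (a - b).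
Proof.
  intros Ha Hb. pose proof (exp_pos (- M)).
  rewrite <- Rabs_Ropp, <- (Rabs_Ropp (a - b)).
  replace (- (ln a - ln b)) with (ln b - ln a) by ring. replace (- (a - b)) with (b - a) by ring.
  assert (Hc : forall c, between a b c -> exp (- M) <= c)
    by (unfold between, Rmin; intros c Hc; destruct (Rle_dec a b); lra).
  apply (Rabs_diff_le_of_deriv ln Rinv a b); intros c Hbc; pose proof (Hc c Hbc).
  - apply derivable_pt_lim_ln. lra.
  - rewrite Rabs_pos_eq by (left; apply Rinv_0_lt_compat; lra).
    replace (exp M) with (/ exp (- M)) by (rewrite exp_Ropp, Rinv_inv; auto).
    apply Rinv_le_contravar; auto.
Qed.

Lemma exponent_oscillation r lam0 mu eps : 0 < r -> 0 < lam0 < 1 -> 0 < mu < 1 ->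
  (forall u v, mu * lam0 * r <= u <= r -> mu * lam0 * r <= v <= r ->
     Rabs (alpha' u - alpha' v) <= eps) ->
  forall t tau, lam0 * r <= t <= r -> lam0 * r <= tau <= r ->
  Rabs (exponent alpha t - exponent alpha tau) <= exp M * (3 * eps + 4 * mu * exp M).
Proof.
  intros Hr Hl Hm Hosc t tau Ht Htau.
  assert (Hl0 : 0 < lam0 * r) by nra. assert (Hmul : mu * lam0 * r <= lam0 * r) by nra.
  destruct (alpha_ratio_near_deriv mu t Hm ltac:(lra)) as [x1 [Hx1 E1]].
  destruct (alpha_ratio_near_deriv mu tau Hm ltac:(lra)) as [x2 [Hx2 E2]].
  assert (B1 : Rabs (alpha' x1 - alpha' t) <= eps) by (apply Hosc; nra).
  assert (B2 : Rabs (alpha' x2 - alpha' tau) <= eps) by (apply Hosc; nra).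
  assert (B3 : Rabs (alpha' t - alpha' tau) <= eps) by (apply Hosc; nra).
  unfold exponent. pose proof (alpha_ratio_bounds t ltac:(lra)) as [R1 _].
  pose proof (alpha_ratio_bounds tau ltac:(lra)) as [R2 _].
  eapply Rle_trans; [apply ln_lipschitz; auto|]. apply Rmult_le_compat_l; [left; apply exp_pos|].
  replace (alpha t / t - alpha tau / tau) with
    ((alpha t / t - alpha' t) + (alpha' t - alpha' tau) - (alpha tau / tau - alpha' tau)) by ring.
  eapply Rle_trans; [apply Rabs_triang|]. rewrite Rabs_Ropp.
  eapply Rle_trans; [apply Rplus_le_compat_r; apply Rabs_triang|]. lra.
Qed.

Lemma exponent_oscillation_le lam0 eps : 0 < lam0 < 1 -> 0 < eps ->
  exists lam eps', 0 < lam < 1 /\ 0 < eps' /\ forall r, 0 < r ->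
    (forall u v, lam * r <= u <= r -> lam * r <= v <= r -> Rabs (alpha' u - alpha' v) <= eps') ->
    forall t tau, lam0 * r <= t <= r -> lam0 * r <= tau <= r ->
      Rabs (exponent alpha t - exponent alpha tau) <= eps.
Proof.
  intros Hl Heps. set (e := exp M). assert (He : 0 < e) by apply exp_pos.
  set (mu := eps / (8 * e * e + eps)). set (eps' := eps / (6 * e)).
  assert (Hmu : 0 < mu < 1).
  { unfold mu. split; [apply Rdiv_lt_0_compat; nra|].
    apply (Rmult_lt_reg_r (8 * e * e + eps)); [nra|].
    unfold Rdiv. rewrite Rmult_assoc, Rinv_l by nra. nra. }
  assert (Hbudget : e * (3 * eps' + 4 * mu * e) <= eps).
  { replace (e * (3 * eps' + 4 * mu * e)) with (eps / 2 + eps * (4 * e * e / (8 * e * e + eps)))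
      by (unfold mu, eps'; field; nra).
    assert (4 * e * e / (8 * e * e + eps) <= / 2).
    { apply (Rmult_le_reg_r (8 * e * e + eps)); [nra|].
      unfold Rdiv. rewrite Rmult_assoc, Rinv_l by nra. nra. }
    nra. }
  exists (mu * lam0), eps'. split; [split; nra|]. split; [unfold eps'; apply Rdiv_lt_0_compat; lra|].
  intros r Hr Hosc t tau Ht Htau.
  eapply Rle_trans; [apply (exponent_oscillation r lam0 mu eps'); eauto|]. exact Hbudget.
Qed.
End Exponent.

Lemma exponent_SO alpha : SOS alpha -> exists M,
  (forall t, 0 < t -> Rabs (exponent alpha t) <= M) /\ SO (fun s => RtoC (exponent alpha s)).
Proof.
  intros [Hpos [[beta [Hb1 _]] [_ [alpha' [Hd [[M HM] [_ [_ [_ [SO0 SOI]]]]]]]]]].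
  exists M. pose proof (exponent_bound alpha alpha' beta M Hpos Hb1 Hd HM) as Hbnd.
  pose proof (exponent_oscillation_le alpha alpha' beta M Hpos Hb1 Hd HM) as Hosc.
  split; [exact Hbnd|]. split; [|split; [|split]].
  - exists M. intros t Ht. rewrite Cmod_R. auto.
  - intros t Ht eps Heps. destruct (exponent_derivable alpha alpha' beta M Hpos Hb1 Hd HM t Ht) as [l Hl].
    destruct (derivable_pt_lim_eps _ _ _ Hl eps Heps) as [d [Hd0 Hdd]]. exists d; split; auto.
    intros s Hs Hst. rewrite Cmod_RtoC_minus. auto.
  - intros lam0 Hl eps Heps. destruct (Hosc lam0 eps Hl Heps) as [lam [eps' [Hlam [He' Hfin]]]].
    destruct (SO0 lam Hlam eps' He') as [d [Hd0 Hdd]]. exists d; split; auto.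
    intros r Hr t tau Ht Htau. rewrite Cmod_RtoC_minus.
    apply (Hfin r); auto; try lra. intros u v Hu Hv.
    pose proof (Hdd r Hr u v Hu Hv) as X. cbv beta in X. rewrite Cmod_RtoC_minus in X. auto.
  - intros lam0 Hl eps Heps. destruct (Hosc lam0 eps Hl Heps) as [lam [eps' [Hlam [He' Hfin]]]].
    destruct (SOI lam Hlam eps' He') as [N HN]. exists (Rmax N 0).
    intros r Hr t tau Ht Htau. rewrite Cmod_RtoC_minus.
    pose proof (Rmax_l N 0); pose proof (Rmax_r N 0).
    apply (Hfin r); auto; try lra. intros u v Hu Hv.
    pose proof (HN r ltac:(lra) u v Hu Hv) as X. cbv beta in X. rewrite Cmod_RtoC_minus in X. auto.
Qed.

Lemma SO_of_lipschitz (g k : R -> C) L : SO g -> 0 <= L -> bounded_on_Rp k ->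
  (forall s t, 0 < s -> 0 < t -> Cmod (k s - k t)%C <= L * Cmod (g s - g t)%C) -> SO k.
Proof.
  intros [_ [Gc [G0 GI]]] HL Hb Hk.
  set (eta eps := eps / (L + 1)).
  assert (Heta : forall eps, 0 < eps -> 0 < eta eps) by (intros; apply Rdiv_lt_0_compat; lra).
  assert (HLeta : forall eps x, 0 < eps -> 0 <= x -> x <= eta eps -> L * x <= eps).
  { intros eps x He Hx0 Hx. assert (L * eta eps <= eps).
    { apply (Rmult_le_reg_r (L + 1)); [lra|]. unfold eta.
      replace (L * (eps / (L + 1)) * (L + 1)) with (L * eps) by (field; lra). nra. }
    nra. }
  assert (HLeta' : forall eps x, 0 < eps -> 0 <= x -> x < eta eps -> L * x < eps).
  { intros eps x He Hx0 Hx. assert (L * eta eps < eps).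
    { apply (Rmult_lt_reg_r (L + 1)); [lra|]. unfold eta.
      replace (L * (eps / (L + 1)) * (L + 1)) with (L * eps) by (field; lra). nra. }
    nra. }
  split; [auto|]. split; [|split].
  - intros t Ht eps He. destruct (Gc t Ht (eta eps) (Heta eps He)) as [d [Hd Hdd]].
    exists d; split; auto. intros s Hs Hst.
    eapply Rle_lt_trans; [apply Hk; auto|]. apply HLeta'; auto using Cmod_ge_0.
  - intros lam Hl eps He. destruct (G0 lam Hl (eta eps) (Heta eps He)) as [d [Hd Hdd]].
    exists d; split; auto. intros r Hr t tau Ht Htau.
    eapply Rle_trans; [apply Hk; nra|]. apply HLeta; eauto using Cmod_ge_0.
  - intros lam Hl eps He. destruct (GI lam Hl (eta eps) (Heta eps He)) as [N HN].
    exists (Rmax N 0). intros r Hr t tau Ht Htau.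
    pose proof (Rmax_l N 0); pose proof (Rmax_r N 0).
    eapply Rle_trans; [apply Hk; nra|]. apply HLeta; auto using Cmod_ge_0. apply (HN r); auto; lra.
Qed.

Lemma SO_const (c : C) : SO (fun _ => c).
Proof.
  assert (Hz : forall a : C, Cmod (a - a)%C = 0)
    by (intros a; replace (a - a)%C with (RtoC 0) by ring; apply Cmod_0).
  split; [exists (Cmod c); intros; lra|]. split; [|split].
  - intros t Ht eps He. exists 1. split; [lra|]. intros. rewrite Hz. auto.
  - intros lam Hl eps He. exists 1. split; [lra|]. intros. rewrite Hz. lra.
  - intros lam Hl eps He. exists 0. intros. rewrite Hz. lra.
Qed.

Lemma SO_ext (f g : R -> C) : SO f -> (forall t, 0 < t -> f t = g t) -> SO g.
Proof.
  intros Hf E. apply (SO_of_lipschitz f g 1 Hf); [lra| |].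
  - destruct Hf as [[M HM] _]. exists M. intros t Ht. rewrite <- E; auto.
  - intros s t Hs Ht. rewrite <- (E s), <- (E t); auto. lra.
Qed.

Lemma SO_add_const (f : R -> C) (c : C) : SO f -> SO (fun t => f t + c)%C.
Proof.
  intros Hf. apply (SO_of_lipschitz f _ 1 Hf); [lra| |].
  - destruct Hf as [[M HM] _]. exists (M + Cmod c). intros t Ht.
    eapply Rle_trans; [apply Cmod_triangle|]. specialize (HM t Ht). lra.
  - intros s t _ _. replace (f s + c - (f t + c))%C with (f s - f t)%C by ring. lra.
Qed.

Lemma SO_inv (g : R -> C) b : SO g -> 0 < b -> (forall t, 0 < t -> b <= Cmod (g t)) ->
  SO (fun t => / g t)%C.
Proof.
  intros Hg Hb Hl.
  assert (Hnz : forall t, 0 < t -> g t <> 0%C).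
  { intros t Ht E. specialize (Hl t Ht). rewrite E, Cmod_0 in Hl. lra. }
  apply (SO_of_lipschitz g _ (/ (b * b)) Hg); [left; apply Rinv_0_lt_compat; nra| |].
  - exists (/ b). intros t Ht. rewrite Cmod_inv by auto. apply Rinv_le_contravar; auto.
  - intros s t Hs Ht.
    replace (/ g s - / g t)%C with ((g t - g s) * / g s * / g t)%C by (field; split; auto).
    rewrite !Cmod_mult, !Cmod_inv by auto.
    replace (Cmod (g t - g s)%C) with (Cmod (g s - g t)%C) by (rewrite <- Cmod_opp; f_equal; ring).
    pose proof (Hl s Hs); pose proof (Hl t Ht). pose proof (Cmod_ge_0 (g s - g t)%C).
    assert (/ Cmod (g s) * / Cmod (g t) <= / (b * b)).
    { rewrite <- Rinv_mult. apply Rinv_le_contravar; [nra | apply Rmult_le_compat; lra]. }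
    rewrite Rmult_assoc, (Rmult_comm (Cmod (g s - g t)%C)).
    apply Rmult_le_compat_r; auto.
Qed.

Lemma character_one (Xi : (R -> C) -> C) : character Xi -> Xi (fun _ => 1%C) = 1%C.
Proof.
  intros [_ [_ [_ [Hmul [f0 [Hf0 Hnz]]]]]].
  pose proof (Hmul (fun _ => 1%C) f0 (SO_const 1%C) Hf0) as E. cbv beta in E.
  replace (fun t => (1 * f0 t)%C) with f0 in E by (apply functional_extensionality; intros; ring).
  replace (Xi (fun _ => 1%C)) with (Xi (fun _ => 1%C) * Xi f0 * / Xi f0)%C by (field; auto).
  rewrite <- E. field; auto.
Qed.

(* If [Xi f] had nonzero imaginary part, [f - Xi f] would be invertible in
   [SO(R_+)] although [Xi] annihilates it. *)
Lemma character_real (Xi : (R -> C) -> C) (f : R -> C) : character Xi -> SO f ->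
  (forall t, snd (f t) = 0) -> Xi f = RtoC (fst (Xi f)).
Proof.
  intros Hchar Hf Hreal. pose proof (character_one Xi Hchar) as X1.
  destruct Hchar as [Hext [Hadd [Hsc [Hmul _]]]].
  set (w := Xi f).
  destruct (Req_dec (snd w) 0) as [Hb | Hb].
  { destruct w as [a b]. simpl in *. now subst b. }
  exfalso.
  set (h := fun t => (f t + (- w) * 1)%C).
  assert (Hh : SO h) by (apply SO_add_const; auto).
  assert (Xh : Xi h = 0%C).
  { unfold h. rewrite Hadd, (Hsc (- w)%C (fun _ => 1%C)), X1 by (auto using SO_const).
    fold w. ring. }
  assert (Hlow : forall t, 0 < t -> Rabs (snd w) <= Cmod (h t)).
  { intros t Ht. eapply Rle_trans; [|apply Rmax_Cmod]. eapply Rle_trans; [|apply Rmax_r].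
    unfold h. simpl. rewrite Hreal. right. rewrite <- Rabs_Ropp. f_equal. ring. }
  assert (Hhnz : forall t, 0 < t -> h t <> 0%C).
  { intros t Ht E. specialize (Hlow t Ht). rewrite E, Cmod_0 in Hlow.
    pose proof (Rabs_pos_lt _ Hb). lra. }
  assert (Hinv : SO (fun t => / h t)%C)
    by (apply (SO_inv h (Rabs (snd w))); auto; apply Rabs_pos_lt; auto).
  assert (Hprod : SO (fun t => h t * / h t)%C)
    by (apply (SO_ext (fun _ => 1%C)); [apply SO_const | intros t Ht; field; auto]).
  pose proof (Hmul h (fun t => / h t)%C Hh Hinv) as E. cbv beta in E.
  rewrite (Hext (fun t => h t * / h t)%C (fun _ => 1%C) Hprod (SO_const 1%C)) in E
    by (intros t Ht; field; auto).
  rewrite X1, Xh in E. apply (f_equal fst) in E. simpl in E. lra.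
Qed.

Lemma Rmult_lt_of_lt_div a b c : 0 < c -> a < b / c -> a * c < b.
Proof.
  intros Hc H. apply (Rmult_lt_compat_r c) in H; auto.
  unfold Rdiv in H. rewrite Rmult_assoc, Rinv_l, Rmult_1_r in H; lra.
Qed.

Section CpairAlongExponent.
Variables (U1 V1 W1 U2 V2 W2 : R -> R -> R) (K B : R) (om : R -> R).
Hypotheses (H1 : decaying_family U1 V1 W1 K B) (H2 : decaying_family U2 V2 W2 K B) (HB : 0 <= B)
  (Hom : forall t, 0 < t -> Rabs (om t) <= K) (HSO : SO (fun t => RtoC (om t))).

Lemma cpair_along_Cb_V : Cb_V (fun t x => cpair U1 U2 (om t) x).
Proof.
  split; [|split].
  - intros t Ht. apply (atan_controlled_in_V _ (2 * B) (2 * B)); [|lra].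
    apply (cpair_atan_controlled U1 V1 W1 U2 V2 W2 K B); auto.
  - exists (2 * B + 2 * B * PI). intros t Ht.
    apply (atan_controlled_Vnorm_le _ (2 * B) (2 * B)); [|lra].
    apply (cpair_atan_controlled U1 V1 W1 U2 V2 W2 K B); auto.
  - intros t Ht eps He. destruct HSO as [_ [Hcont _]].
    set (c := 2 * B + 2 * B * PI + 1).
    assert (Hc : 0 < c) by (unfold c; pose proof PI_RGT_0; nra).
    destruct (Hcont t Ht (eps / c) ltac:(apply Rdiv_lt_0_compat; lra)) as [d [Hd Hdd]].
    exists (Rmin d t). split; [apply Rmin_pos; lra|]. intros tau Htau Htd.
    pose proof (Rmin_l d t).
    pose proof (Hdd tau Htau ltac:(lra)) as Hclose. rewrite Cmod_RtoC_minus in Hclose.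
    set (D := Rabs (om tau - om t)) in *. assert (0 <= D) by apply Rabs_pos.
    eapply Vnorm_le_weaken.
    + apply (atan_controlled_Vnorm_le _ (2 * (B * D)) (2 * (B * D))); [|nra].
      apply (cpair_diff_atan_controlled U1 V1 W1 U2 V2 W2 K B); auto.
    + pose proof (Rmult_lt_of_lt_div D eps c Hc Hclose). pose proof PI_RGT_0. unfold c in *. nra.
Qed.

Lemma cpair_along_sup_small (r0 : R -> Prop) eps :
  (forall r, r0 r -> 0 < r) -> 0 < eps ->
  (forall r, r0 r -> forall t tau, r <= t <= 2 * r -> r <= tau <= 2 * r ->
     Rabs (om t - om tau) <= eps / (2 * B + 1)) ->
  forall r, r0 r -> forall t tau, r <= t <= 2 * r -> r <= tau <= 2 * r ->
    supnorm_le (fun x => cpair U1 U2 (om t) x - cpair U1 U2 (om tau) x)%C eps.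
Proof.
  intros Hr0 He Hosc r Hr t tau Ht Htau x. pose proof (Hr0 r Hr).
  eapply Rle_trans; [apply (cpair_sup_diff U1 V1 W1 U2 V2 W2 K B); auto; apply Hom; lra|].
  pose proof (Hosc r Hr t tau Ht Htau) as X.
  apply (Rmult_le_compat_r (2 * B + 1)) in X; [|lra].
  unfold Rdiv in X. rewrite Rmult_assoc, Rinv_l, Rmult_1_r in X by lra.
  pose proof (Rabs_pos (om t - om tau)). nra.
Qed.

(* The dyadic windows [[r, 2 r]] of [SO_V] are the windows [[lam r', r']] of
   [SO] with [lam = 1/2] and [r' = 2 r]. *)
Lemma cpair_along_SO_V : SO_V (fun t x => cpair U1 U2 (om t) x).
Proof.
  destruct HSO as [_ [_ [HS0 HSI]]].
  assert (Hc : 0 < 2 * B + 1) by lra.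
  split; [exact cpair_along_Cb_V | split]; intros eps He.
  - destruct (HS0 (1 / 2) ltac:(lra) (eps / (2 * B + 1)) ltac:(apply Rdiv_lt_0_compat; lra))
      as [d [Hd Hdd]].
    exists (d / 2). split; [lra|].
    apply (cpair_along_sup_small (fun r => 0 < r < d / 2)); auto; [intros; lra|].
    intros r Hr t tau Ht Htau. pose proof (Hdd (2 * r) ltac:(lra) t tau ltac:(lra) ltac:(lra)) as X.
    cbv beta in X. rewrite Cmod_RtoC_minus in X. exact X.
  - destruct (HSI (1 / 2) ltac:(lra) (eps / (2 * B + 1)) ltac:(apply Rdiv_lt_0_compat; lra))
      as [N HN].
    exists (Rmax N 0). pose proof (Rmax_l N 0); pose proof (Rmax_r N 0).
    apply (cpair_along_sup_small (fun r => Rmax N 0 < r)); auto; [intros; lra|].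
    intros r Hr t tau Ht Htau. pose proof (HN (2 * r) ltac:(lra) t tau ltac:(lra) ltac:(lra)) as X.
    cbv beta in X. rewrite Cmod_RtoC_minus in X. exact X.
Qed.

Lemma cpair_along_E_V : E_V (fun t x => cpair U1 U2 (om t) x).
Proof.
  split; [exact cpair_along_SO_V|]. intros eps He.
  set (c := 2 * B + 2 * (3 * B) * PI + 1).
  assert (Hc : 0 < c) by (unfold c; pose proof PI_RGT_0; nra).
  exists (Rmin 1 (eps / c)). split; [apply Rmin_pos; [lra | apply Rdiv_lt_0_compat; lra]|].
  intros h Hh t Ht. pose proof (Rmin_l 1 (eps / c)); pose proof (Rmin_r 1 (eps / c)).
  pose proof (Rabs_pos h).
  eapply Vnorm_le_weaken.
  - apply (atan_controlled_Vnorm_le _ (2 * (B * Rabs h)) (2 * (3 * B * Rabs h))); [|nra].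
    apply (cpair_shift_atan_controlled U1 V1 W1 U2 V2 W2 K B); auto; lra.
  - pose proof (Rmult_lt_of_lt_div (Rabs h) eps c Hc ltac:(lra)). pose proof PI_RGT_0.
    unfold c in *. nra.
Qed.
End CpairAlongExponent.

Definition kern_divdiff (p w0 : R) : R -> R -> C :=
  cpair (fun s x => divdiff w0 (fun t => fst (kern_with p pre_one t x))
                               (fun t => fst (kern_with p (pre_s p) t x)) s)
        (fun s x => divdiff w0 (fun t => snd (kern_with p pre_one t x))
                               (fun t => snd (kern_with p (pre_s p) t x)) s).

Lemma kern_divdiff_factor p w0 s x :
  ((RtoC s - RtoC w0) * kern_divdiff p w0 s x)%C
  = (kern_with p pre_one s x - kern_with p pre_one w0 x)%C.
Proof.
  unfold kern_divdiff, cpair, divdiff. destruct (Req_EM_T s w0) as [-> | E]; [ring|].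
  destruct (kern_with p pre_one s x) as [a1 b1], (kern_with p pre_one w0 x) as [a2 b2].
  apply injective_projections; simpl; field; lra.
Qed.

Lemma a_fun_kern p s x : a_fun p (RtoC s) x = (kern_with p pre_one s x * r_p p x)%C.
Proof. unfold a_fun, kern_with, pre_one, kern, phase, zp. ring. Qed.

Lemma kern_divdiff_E_V p w0 K om : 1 < p -> Rabs w0 <= K ->
  (forall t, 0 < t -> Rabs (om t) <= K) -> SO (fun t => RtoC (om t)) ->
  E_V (fun t x => kern_divdiff p w0 (om t) x).
Proof.
  intros hp Hw0 Hom HSO. assert (HK : 0 <= K) by (pose proof (Rabs_pos w0); lra).
  destruct (kern_with_smooth_family p K hp HK fst (or_introl eq_refl)) as [B1 HF1].
  destruct (kern_with_smooth_family p K hp HK snd (or_intror eq_refl)) as [B2 HF2].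
  pose proof (divdiff_decaying_family _ _ _ _ _ _ _ _ K B1 w0 Hw0 HF1) as HD1.
  pose proof (divdiff_decaying_family _ _ _ _ _ _ _ _ K B2 w0 Hw0 HF2) as HD2.
  pose proof (decaying_family_B_nonneg _ _ _ _ _ HD1 HK).
  pose proof (decaying_family_B_nonneg _ _ _ _ _ HD2 HK).
  eapply (cpair_along_E_V _ _ _ _ _ _ K (B1 + B2));
    [eapply decaying_family_weaken; [exact HD1 | lra]
    |eapply decaying_family_weaken; [exact HD2 | lra] | lra | exact Hom | exact HSO].
Qed.

Theorem lemma7p4 (p : R) (alpha : R -> R) (Xi : (R -> C) -> C) :
  1 < p -> SOS alpha -> in_Delta Xi ->
  exists b : R -> R -> C, E_V b /\
    forall t x, 0 < t ->
      (a_fun p (RtoC (exponent alpha t)) x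
         - a_fun p (Xi (fun s => RtoC (exponent alpha s))) x)%C
      = ((RtoC (exponent alpha t) - Xi (fun s => RtoC (exponent alpha s)))
           * r_p p x * b t x)%C.
Proof.
  intros hp HS [Hchar _].
  destruct (exponent_SO alpha HS) as [M [Hbnd HSO]].
  rewrite (character_real Xi _ Hchar HSO (fun t => eq_refl)).
  set (w0 := fst (Xi (fun s => RtoC (exponent alpha s)))).
  exists (fun t x => kern_divdiff p w0 (exponent alpha t) x). split.
  - apply (kern_divdiff_E_V p w0 (Rmax M (Rabs w0))); auto; [apply Rmax_r|].
    intros t Ht. pose proof (Hbnd t Ht). pose proof (Rmax_l M (Rabs w0)). lra.
  - intros t x _. rewrite !a_fun_kern.
    transitivity ((kern_with p pre_one (exponent alpha t) x - kern_with p pre_one w0 x) * r_p p x)%C;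
      [ring | rewrite <- kern_divdiff_factor; ring].
Qed.
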